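(* (a) If $x=u(\tau)$ and $y=u(2\tau)$, then $x^4(y^4+1)=2y^2$. (b) If $x=v(\tau)$ and $y=v(2\tau)$, then $x^2y+x^2+y^2=y$. These hold for all $\tau$ in the upper half-plane.
   Context: For $\tau$ in the upper half-plane, $q=e^{2\pi i\tau}$ and $q^r:=e^{2\pi i r\tau}$. Define $u(\tau)=\sqrt{2}\,q^{1/8}\prod_{n\ge1}(1+q^n)^{(-1)^n}$ and $v(\tau)=q^{1/2}\prod_{n\ge1}(1-q^n)^{\left(\frac{8}{n}\right)}$, where $\left(\frac{8}{n}\right)$ is the Kronecker symbol ($0$ for $n$ even, $1$ for $n\equiv\pm1\pmod 8$, $-1$ for $n\equiv\pm3\pmod8$). *)

From Stdlib Require Import Reals.
From Coquelicot Require Import Coquelicot.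
Open Scope R_scope.

Definition cexp (z : C) : C :=
  (exp (Re z) * cos (Im z), exp (Re z) * sin (Im z)).

Definition qpow (r : R) (tau : C) : C :=
  cexp (Cmult (Cmult (RtoC (2 * PI * r)) Ci) tau).

Definition kron8 (n : nat) : Z :=
  match (n mod 8)%nat with
  | 1%nat | 7%nat => 1%Z
  | 3%nat | 5%nat => (-1)%Z
  | _ => 0%Z
  end.

Definition czpow (w : C) (e : Z) : C :=
  match e with
  | Z0 => RtoC 1
  | Zpos p => Cpow w (Pos.to_nat p)
  | Zneg p => Cinv (Cpow w (Pos.to_nat p))
  end.

Fixpoint pprod (f : nat -> C) (N : nat) : C :=
  match N with
  | O => RtoC 1
  | S M => Cmult (pprod f M) (f (S M))
  end.

Definition u_factor (tau : C) (n : nat) : C :=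
  czpow (Cplus (RtoC 1) (qpow (INR n) tau)) (if Nat.even n then 1%Z else (-1)%Z).

Definition v_factor (tau : C) (n : nat) : C :=
  czpow (Cminus (RtoC 1) (qpow (INR n) tau)) (kron8 n).

Definition prod_conv (f : nat -> C) (P : C) : Prop :=
  filterlim (pprod f) eventually (locally P).

(** Write [U = pi i tau], so that [q = e^(2U)].  The Jacobi triple product, obtained as the
    limit of its finite q-binomial form by Tannery's theorem, identifies the triple products
    [prod_n (1 - e^(2na)) (1 + e^(b + (2n-1)a)) (1 + e^(-b + (2n-1)a))] with the theta series
    [sum_k e^(k^2 a + k b)].  Splitting such a series over even and odd [k] relates the
    triple products at [a] and [4a]; together with [(1 + x) (1 - x) = 1 - x^2] and the
    splitting of a product over even and odd [n], this gives polynomial relations between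
    triple products.
    For (a), [u^2] is [q^(1/4)] times a quotient of two theta constants, and the two
    duplication formulas for theta constants eliminate them.
    For (b), [q^(1/2) v] is [e^U F1 / F3], with [F1], [F3] the triple products over the
    residues [±1], [±3] mod 8.  The dissections [F3 ± e^(U + i pi/2) F1] and [F3 ± e^U F1] of
    two triple products multiply to two relations between [v] and theta constants; written
    at [tau] and [2 tau], together with one more dissection, they eliminate the theta
    constants. *)

From Stdlib Require Import Reals ZArith Lra Lia ClassicalEpsilon FunctionalExtensionality.
From Coquelicot Require Import Coquelicot.
Open Scope R_scope.
Open Scope C_scope.

Local Notation E := cexp.

Definition ipi : C := (0%R, PI).
Definition ipi2 : C := (0%R, (PI / 2)%R).
Definition natC (n : nat) : C := RtoC (INR n).

Lemma natC_S n : natC (S n) = natC n + 1.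
Proof. unfold natC. rewrite S_INR, RtoC_plus. reflexivity. Qed.

Lemma natC_0 : natC 0 = 0.
Proof. reflexivity. Qed.

Lemma natC_add m n : natC (m + n) = natC m + natC n.
Proof. unfold natC. rewrite plus_INR, RtoC_plus. reflexivity. Qed.

Lemma natC_mul m n : natC (m * n) = natC m * natC n.
Proof. unfold natC. rewrite mult_INR, RtoC_mult. reflexivity. Qed.

Lemma natC_sub m n : (n <= m)%nat -> natC (m - n) = natC m - natC n.
Proof. intros H. unfold natC. rewrite minus_INR by exact H. apply RtoC_minus. Qed.

Ltac natC_simpl := repeat rewrite ?natC_S, ?natC_add, ?natC_mul, ?natC_0.

Lemma Re_minus (x y : C) : Re (x - y) = (Re x - Re y)%R.
Proof. reflexivity. Qed.

Lemma Re_natC_mul (n : nat) (x : C) : Re (natC n * x) = (INR n * Re x)%R.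
Proof. apply re_scal_l. Qed.

Lemma Re_ipi : Re ipi = 0%R.
Proof. reflexivity. Qed.

Lemma Re_ipi2 : Re ipi2 = 0%R.
Proof. reflexivity. Qed.

Ltac Re_simpl :=
  repeat rewrite ?re_plus, ?Re_minus, ?re_opp, ?Re_ipi, ?Re_ipi2, ?re_scal_l, ?re_RtoC.

Ltac Re_lt0 := Re_simpl; nra.

Lemma ipi_double : ipi = 2 * ipi2.
Proof. unfold ipi, ipi2. apply injective_projections; simpl; field. Qed.

Lemma exp_le_compat x y : (x <= y)%R -> (exp x <= exp y)%R.
Proof. intros [H|H]. left; apply exp_increasing; auto. subst; lra. Qed.

Lemma exp_lt1_of_neg x : (x < 0)%R -> (0 <= exp x < 1)%R.
Proof. intros. split. left; apply exp_pos. rewrite <- exp_0. apply exp_increasing; auto. Qed.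

Lemma exp_nat_mul n x : exp (INR n * x) = (exp x ^ n)%R.
Proof.
  induction n.
  - replace (INR 0 * x)%R with 0%R by (simpl; ring). rewrite exp_0. reflexivity.
  - rewrite S_INR, Rmult_plus_distr_r, Rmult_1_l, exp_plus, IHn. simpl. ring.
Qed.
Lemma cexp_add x y
 : E (x + y) = E x * E y.
Proof.
  destruct x as [a b], y as [c d]. unfold cexp, Cmult, Cplus, Re, Im; simpl.
  rewrite exp_plus, cos_plus, sin_plus. f_equal; ring.
Qed.

Lemma cexp_0 : E 0 = 1.
Proof.
  unfold cexp, Re, Im; simpl. rewrite exp_0, cos_0, sin_0.
  apply injective_projections; simpl; ring.
Qed.

Lemma cexp_neq0 x : E x <> 0.
Proof.
  intros H. assert (H1 : E x * E (- x) = 0) by (rewrite H; ring).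
  rewrite <- cexp_add in H1.
  replace (x + - x) with (RtoC 0) in H1 by ring.
  rewrite cexp_0 in H1. injection H1. lra.
Qed.

Lemma cexp_opp x : E (- x) = / E x.
Proof.
  assert (H1 : E x * E (- x) = 1).
  { rewrite <- cexp_add. replace (x + - x) with (RtoC 0) by ring. apply cexp_0. }
  pose proof (cexp_neq0 x).
  replace (E (- x)) with (/ E x * (E x * E (- x))) by (field; auto).
  rewrite H1. ring.
Qed.

Lemma Cmod_cexp x : Cmod (E x) = exp (Re x).
Proof.
  destruct x as [a b]. unfold cexp, Cmod, Re, Im; simpl.
  match goal with |- sqrt ?X = _ => replace X with (exp a ^ 2)%R end.
  - rewrite sqrt_pow2; auto. left; apply exp_pos.
  - pose proof (sin2_cos2 b). unfold Rsqr in H. nra.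
Qed.

Lemma cexp_natC_mul n x : E (natC n * x) = E x ^ n.
Proof.
  induction n.
  - replace (natC 0 * x) with (RtoC 0) by (unfold natC; simpl; ring). apply cexp_0.
  - rewrite natC_S. replace ((natC n + 1) * x) with (natC n * x + x) by ring.
    rewrite cexp_add, IHn. simpl. ring.
Qed.

Lemma cexp_ipi : E ipi = -1.
Proof.
  unfold cexp, ipi, Re, Im; simpl. rewrite exp_0, cos_PI, sin_PI.
  apply injective_projections; simpl; ring.
Qed.

Lemma cexp_add_ipi x : E (x + ipi) = - E x.
Proof. rewrite cexp_add, cexp_ipi. ring. Qed.

Lemma cexp_add_2ipi_nat x (k : nat) : E (x + natC k * (2 * ipi)) = E x.
Proof.
  rewrite cexp_add, cexp_natC_mul.
  replace (2 * ipi) with (ipi + ipi) by ring. rewrite cexp_add, cexp_ipi.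
  replace (-1 * -1) with (RtoC 1) by ring. rewrite Cpow_1_l. ring.
Qed.

Lemma cexp_periodic x y (m : Z) : x = y + IZR m * (2 * ipi) -> E x = E y.
Proof.
  intros ->. destruct m as [|p|p].
  - f_equal. simpl. ring.
  - replace (RtoC (IZR (Zpos p))) with (natC (Pos.to_nat p)).
    + apply cexp_add_2ipi_nat.
    + unfold natC. rewrite INR_IZR_INZ, positive_nat_Z. reflexivity.
  - rewrite <- (cexp_add_2ipi_nat _ (Pos.to_nat p)). f_equal.
    unfold natC. rewrite INR_IZR_INZ, positive_nat_Z.
    replace (IZR (Z.neg p)) with (- IZR (Z.pos p))%R by reflexivity. rewrite RtoC_opp. ring.
Qed.

Ltac cexp_period_by m := apply (cexp_periodic _ _ m); rewrite ?ipi_double; ring.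
Ltac cexp_period :=
  first [ cexp_period_by 0%Z | cexp_period_by 1%Z | cexp_period_by (-1)%Z
        | cexp_period_by 2%Z | cexp_period_by (-2)%Z | cexp_period_by 3%Z
        | cexp_period_by (-3)%Z | cexp_period_by 4%Z | cexp_period_by (-4)%Z
        | cexp_period_by 5%Z | cexp_period_by (-5)%Z ].

Definition cv (u : nat -> C) (l : C) :=
  forall eps, (0 < eps)%R -> exists N, forall n, (N <= n)%nat -> (Cmod (u n - l) < eps)%R.

Lemma Cmod_minus_sym x y : Cmod (x - y) = Cmod (y - x).
Proof. replace (x - y) with (- (y - x)) by ring. apply Cmod_opp. Qed.

Lemma Cmod_tri_minus x y z : (Cmod (x - z) <= Cmod (x - y) + Cmod (y - z))%R.
Proof. replace (x - z) with ((x - y) + (y - z)) by ring. apply Cmod_triangle. Qed.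

Lemma Cmod_reverse_triangle x y : (Cmod x - Cmod y <= Cmod (x - y))%R.
Proof. pose proof (Cmod_triangle (x - y) y). replace (x - y + y) with x in H by ring. lra. Qed.

Lemma Cmod_le_1plus x : (Cmod x <= 1 + Cmod (x - 1))%R.
Proof.
  pose proof (Cmod_triangle (x - 1) 1). replace (x - 1 + 1) with x in H by ring.
  rewrite Cmod_1 in H. lra.
Qed.

Lemma Cmod_small_0 z : (forall eps, (0 < eps)%R -> (Cmod z < eps)%R) -> z = 0.
Proof.
  intros H. apply Cmod_eq_0. pose proof (Cmod_ge_0 z).
  destruct (Rle_lt_or_eq_dec _ _ H0) as [Hl|Hl]; auto.
  specialize (H _ Hl). lra.
Qed.

Lemma cv_unique u l1 l2 : cv u l1 -> cv u l2 -> l1 = l2.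
Proof.
  intros H1 H2.
  assert (l1 - l2 = 0).
  { apply Cmod_small_0. intros eps He.
    destruct (H1 (eps/2)%R) as [N1 HN1]; [lra|].
    destruct (H2 (eps/2)%R) as [N2 HN2]; [lra|].
    specialize (HN1 (N1 + N2)%nat ltac:(lia)). specialize (HN2 (N1 + N2)%nat ltac:(lia)).
    pose proof (Cmod_tri_minus l1 (u (N1+N2)%nat) l2).
    rewrite (Cmod_minus_sym l1 (u _)) in H. lra. }
  replace l1 with ((l1 - l2) + l2) by ring. rewrite H. ring.
Qed.

Lemma cv_const c : cv (fun _ => c) c.
Proof.
  intros eps He. exists 0%nat. intros. replace (c - c) with (RtoC 0) by ring.
  rewrite Cmod_0. auto.
Qed.

Lemma cv_ext u v l : (forall n, u n = v n) -> cv u l -> cv v l.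
Proof.
  intros He H eps Hp. destruct (H eps Hp) as [N HN]. exists N. intros. rewrite <- He. auto.
Qed.

Lemma cv_eventually_ext u v l :
  (exists N0, forall n, (N0 <= n)%nat -> u n = v n) -> cv u l -> cv v l.
Proof.
  intros [N0 He] H eps Hp. destruct (H eps Hp) as [N HN]. exists (N + N0)%nat.
  intros. rewrite <- He by lia. apply HN. lia.
Qed.

Lemma cv_plus u v a b : cv u a -> cv v b -> cv (fun n => u n + v n) (a + b).
Proof.
  intros Hu Hv eps He.
  destruct (Hu (eps/2)%R) as [N1 H1]; [lra|].
  destruct (Hv (eps/2)%R) as [N2 H2]; [lra|].
  exists (N1 + N2)%nat. intros n Hn.
  replace (u n + v n - (a + b)) with ((u n - a) + (v n - b)) by ring.
  eapply Rle_lt_trans. apply Cmod_triangle.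
  specialize (H1 n ltac:(lia)). specialize (H2 n ltac:(lia)). lra.
Qed.

Lemma cv_opp u a : cv u a -> cv (fun n => - u n) (- a).
Proof.
  intros H eps He. destruct (H eps He) as [N HN]. exists N. intros.
  replace (- u n - - a) with (- (u n - a)) by ring. rewrite Cmod_opp. auto.
Qed.

Lemma cv_minus u v a b : cv u a -> cv v b -> cv (fun n => u n - v n) (a - b).
Proof. intros. apply (cv_plus u (fun n => - v n)); auto. apply cv_opp; auto. Qed.

Lemma cv_bounded u l : cv u l -> exists M, (0 < M)%R /\ forall n, (Cmod (u n) <= M)%R.
Proof.
  intros H. destruct (H 1%R) as [N HN]; [lra|].
  assert (Hf : forall K, exists M, (0 < M)%R /\ forall n, (n < K)%nat -> (Cmod (u n) <= M)%R).
  { induction K.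
    - exists 1%R. split; [lra|]. intros; lia.
    - destruct IHK as [M [HM HK]]. exists (Rmax M (Cmod (u K))). split.
      + eapply Rlt_le_trans; [exact HM|]. apply Rmax_l.
      + intros n Hn. destruct (Nat.eq_dec n K).
        * subst. apply Rmax_r.
        * eapply Rle_trans; [apply HK; lia|]. apply Rmax_l. }
  destruct (Hf N) as [M [HM HK]].
  exists (Rmax M (Cmod l + 1)). split.
  - eapply Rlt_le_trans; [exact HM|]. apply Rmax_l.
  - intros n. destruct (Compare_dec.le_lt_dec N n).
    + specialize (HN n l0). pose proof (Cmod_reverse_triangle (u n) l).
      eapply Rle_trans; [|apply Rmax_r]. lra.
    + eapply Rle_trans; [apply HK; lia|]. apply Rmax_l.
Qed.

Lemma cv_mult u v a b : cv u a -> cv v b -> cv (fun n => u n * v n) (a * b).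
Proof.
  intros Hu Hv eps He.
  destruct (cv_bounded u a Hu) as [M [HM HMb]].
  set (K := (M + Cmod b + 1)%R).
  assert (HK : (0 < K)%R) by (unfold K; pose proof (Cmod_ge_0 b); lra).
  destruct (Hu (eps / (2 * K))%R) as [N1 H1].
  { apply Rdiv_lt_0_compat; lra. }
  destruct (Hv (eps / (2 * K))%R) as [N2 H2].
  { apply Rdiv_lt_0_compat; lra. }
  exists (N1 + N2)%nat. intros n Hn.
  replace (u n * v n - a * b) with (u n * (v n - b) + (u n - a) * b) by ring.
  eapply Rle_lt_trans. apply Cmod_triangle. rewrite !Cmod_mult.
  specialize (H1 n ltac:(lia)). specialize (H2 n ltac:(lia)).
  pose proof (HMb n). pose proof (Cmod_ge_0 (v n - b)). pose proof (Cmod_ge_0 (u n - a)).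
  pose proof (Cmod_ge_0 b).
  assert (Ha : (Cmod (u n) * Cmod (v n - b) <= M * (eps / (2 * K)))%R).
  { apply Rmult_le_compat; auto. apply Cmod_ge_0. lra. }
  assert (Hb : (Cmod (u n - a) * Cmod b <= (eps / (2 * K)) * Cmod b)%R).
  { apply Rmult_le_compat_r; lra. }
  assert (Hc : (M * (eps / (2 * K)) + (eps / (2 * K)) * Cmod b < eps)%R).
  { replace (M * (eps / (2 * K)) + (eps / (2 * K)) * Cmod b)%R with
      (eps * ((M + Cmod b) / (2 * K)))%R by (field; lra).
    assert ((M + Cmod b) / (2 * K) < 1)%R.
    { apply (Rmult_lt_reg_r (2 * K)). lra. unfold Rdiv. rewrite Rmult_assoc, Rinv_l by lra.
      unfold K. lra. }
    nra. }
  lra.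
Qed.

Lemma cv_scal c u a : cv u a -> cv (fun n => c * u n) (c * a).
Proof. intros. apply (cv_mult (fun _ => c)); auto. apply cv_const. Qed.

Lemma cv_subseq u l (phi : nat -> nat) :
  (forall N, exists M, forall n, (M <= n)%nat -> (N <= phi n)%nat) ->
  cv u l -> cv (fun n => u (phi n)) l.
Proof.
  intros Hp H eps He. destruct (H eps He) as [N HN]. destruct (Hp N) as [M HM].
  exists M. intros. apply HN. apply HM. auto.
Qed.

Lemma cv_subseq_ge u l (phi : nat -> nat) :
  (forall n, (n <= phi n)%nat) -> cv u l -> cv (fun n => u (phi n)) l.
Proof. intros Hp. apply cv_subseq. intros N. exists N. intros. specialize (Hp n). lia. Qed.

Lemma cv_shift u l k : cv u l -> cv (fun n => u (n + k)%nat) l.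
Proof. apply cv_subseq_ge. intros; lia. Qed.

Lemma cv_shift_sub u l k : cv u l -> cv (fun n => u (n - k)%nat) l.
Proof. apply cv_subseq. intros N. exists (N + k)%nat. intros. lia. Qed.

Lemma cv_inv u l : cv u l -> l <> 0 -> cv (fun n => / u n) (/ l).
Proof.
  intros H Hl eps He.
  assert (Hl' : (0 < Cmod l)%R) by (apply Cmod_gt_0; auto).
  destruct (H (Cmod l / 2)%R) as [N1 H1]; [lra|].
  destruct (H (eps * (Cmod l * Cmod l) / 2)%R) as [N2 H2].
  { apply Rmult_lt_0_compat; [|lra]. apply Rmult_lt_0_compat; nra. }
  exists (N1 + N2)%nat. intros n Hn.
  specialize (H1 n ltac:(lia)). specialize (H2 n ltac:(lia)).
  pose proof (Cmod_reverse_triangle l (u n)). rewrite Cmod_minus_sym in H1.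
  assert (Hu : (Cmod l / 2 <= Cmod (u n))%R) by lra.
  assert (Hun : u n <> 0). { intros Hz. rewrite Hz, Cmod_0 in Hu. lra. }
  replace (/ u n - / l) with ((l - u n) / (u n * l)) by (field; auto).
  rewrite Cmod_div by (apply Cmult_neq_0; auto).
  rewrite Cmod_mult. rewrite Cmod_minus_sym.
  apply (Rmult_lt_reg_r (Cmod (u n) * Cmod l)). nra.
  unfold Rdiv. rewrite Rmult_assoc, Rinv_l by nra. rewrite Rmult_1_r.
  assert (0 <= eps * Cmod l * (Cmod (u n) - Cmod l / 2))%R.
  { apply Rmult_le_pos; [|lra]. apply Rmult_le_pos; lra. }
  nra.
Qed.

Lemma cv_div u v a b : cv u a -> cv v b -> b <> 0 -> cv (fun n => u n / v n) (a / b).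
Proof. intros. apply cv_mult; auto. apply cv_inv; auto. Qed.

Lemma cv_dominated u l (w : nat -> R) :
  (exists N0, forall n, (N0 <= n)%nat -> (Cmod (u n - l) <= w n)%R) ->
  (forall eps, (0 < eps)%R -> exists N, forall n, (N <= n)%nat -> (w n < eps)%R) ->
  cv u l.
Proof.
  intros [N0 H0] Hw eps He. destruct (Hw eps He) as [N HN]. exists (N + N0)%nat.
  intros. eapply Rle_lt_trans. apply H0; lia. apply HN; lia.
Qed.

Lemma geom_eventually_small (r K : R) : (0 <= r < 1)%R ->
  forall eps, (0 < eps)%R -> exists N, forall n, (N <= n)%nat -> (K * r ^ n < eps)%R.
Proof.
  intros Hr eps He.
  destruct (pow_lt_1_zero r ltac:(rewrite Rabs_right; lra) (eps / (Rabs K + 1))%R) as [N HN].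
  { apply Rdiv_lt_0_compat; auto. pose proof (Rabs_pos K); lra. }
  exists N. intros n Hn. specialize (HN n Hn).
  rewrite Rabs_right in HN by (apply Rle_ge, pow_le; lra).
  assert (0 <= r ^ n)%R by (apply pow_le; lra).
  pose proof (Rle_abs K). pose proof (Rabs_pos K).
  apply (Rle_lt_trans _ ((Rabs K + 1) * r ^ n)). nra.
  apply (Rmult_lt_compat_l (Rabs K + 1)) in HN; [|lra].
  replace ((Rabs K + 1) * (eps / (Rabs K + 1)))%R with eps in HN by (field; lra). auto.
Qed.

Definition Cauchy_C (u : nat -> C) :=
  forall eps, (0 < eps)%R -> exists N, forall m n, (N <= m)%nat -> (N <= n)%nat ->
    (Cmod (u m - u n) < eps)%R.

Lemma Cauchy_C_cv u : Cauchy_C u -> exists l, cv u l.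
Proof.
  intros H.
  assert (Hre : Cauchy_crit (fun n => Re (u n))).
  { intros eps He. destruct (H eps He) as [N HN]. exists N. intros n m Hn Hm.
    unfold Rdist. eapply Rle_lt_trans; [|apply (HN n m); lia].
    replace (Re (u n) - Re (u m))%R with (Re (u n - u m)) by reflexivity.
    apply re_le_Cmod. }
  assert (Him : Cauchy_crit (fun n => Im (u n))).
  { intros eps He. destruct (H eps He) as [N HN]. exists N. intros n m Hn Hm.
    unfold Rdist. eapply Rle_lt_trans; [|apply (HN n m); lia].
    replace (Im (u n) - Im (u m))%R with (Im (u n - u m)) by reflexivity.
    eapply Rle_trans; [apply Rmax_r|apply Rmax_Cmod]. }
  destruct (Rcomplete.R_complete _ Hre) as [a Ha].
  destruct (Rcomplete.R_complete _ Him) as [b Hb].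
  exists (a, b). intros eps He.
  destruct (Ha (eps/2)%R) as [N1 H1]; [lra|].
  destruct (Hb (eps/2)%R) as [N2 H2]; [lra|].
  exists (N1 + N2)%nat. intros n Hn.
  specialize (H1 n ltac:(lia)). specialize (H2 n ltac:(lia)). unfold Rdist in *.
  eapply Rle_lt_trans. apply Cmod_2Rmax.
  assert (Hs : (sqrt 2 < 2)%R).
  { rewrite <- (sqrt_pow2 2) at 2 by lra. apply sqrt_lt_1; lra. }
  assert (Hm : (Rmax (Rabs (fst (u n - (a, b))%C)) (Rabs (snd (u n - (a, b))%C)) < eps / 2)%R).
  { apply Rmax_lub_lt; simpl; auto. }
  pose proof (sqrt_pos 2).
  pose proof (Rmax_l (Rabs (fst (u n - (a, b))%C)) (Rabs (snd (u n - (a, b))%C))).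
  pose proof (Rabs_pos (fst (u n - (a, b))%C)).
  nra.
Qed.

Lemma cv_ex_of_geometric_increments u (M r : R) : (0 <= r < 1)%R ->
  (forall n k, (Cmod (u (n + k)%nat - u n) <= M * r ^ n)%R) -> exists l, cv u l.
Proof.
  intros Hr Hd. apply Cauchy_C_cv. intros eps He.
  destruct (geom_eventually_small r M Hr eps He) as [N HN].
  exists N. intros m n Hm Hn. destruct (Compare_dec.le_lt_dec n m).
  - replace m with (n + (m - n))%nat by lia.
    eapply Rle_lt_trans; [apply Hd | apply HN; auto].
  - rewrite Cmod_minus_sym. replace n with (m + (n - m))%nat by lia.
    eapply Rle_lt_trans; [apply Hd | apply HN; auto].
Qed.

Lemma cv_filterlim u l : cv u l -> filterlim u eventually (locally l).
Proof.
  intros H. apply filterlim_locally. intros eps.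
  destruct (H eps (cond_pos eps)) as [N HN]. exists N. intros n Hn.
  apply C_NormedModule_mixin_compat1. apply HN. lia.
Qed.

Lemma cv_bounded_below u l : cv u l -> l <> 0 -> (forall n, u n <> 0) ->
  exists m, (0 < m)%R /\ forall n, (m <= Cmod (u n))%R.
Proof.
  intros H Hl Hn.
  assert (Hl' : (0 < Cmod l)%R) by (apply Cmod_gt_0; auto).
  destruct (H (Cmod l / 2)%R) as [N HN]; [lra|].
  assert (Hf : forall K, exists m, (0 < m)%R /\ forall n, (n < K)%nat -> (m <= Cmod (u n))%R).
  { induction K.
    - exists 1%R. split; [lra|]. intros; lia.
    - destruct IHK as [m [Hm HK]]. exists (Rmin m (Cmod (u K))). split.
      + apply Rmin_pos; auto. apply Cmod_gt_0; auto.
      + intros n Hn'. destruct (Nat.eq_dec n K).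
        * subst. apply Rmin_r.
        * eapply Rle_trans; [apply Rmin_l|]. apply HK; lia. }
  destruct (Hf N) as [m [Hm HK]].
  exists (Rmin m (Cmod l / 2)). split.
  - apply Rmin_pos; lra.
  - intros n. destruct (Compare_dec.le_lt_dec N n).
    + specialize (HN n l0). rewrite Cmod_minus_sym in HN.
      pose proof (Cmod_reverse_triangle l (u n)). eapply Rle_trans; [apply Rmin_r|]. lra.
    + eapply Rle_trans; [apply Rmin_l|]. apply HK; lia.
Qed.

(** [sum_lt f n] sums [f i] over [0 <= i < n]; [sum_1to] and [rsum] sum over [1 <= k <= n]. *)
Fixpoint rsum (g : nat -> R) (N : nat) : R :=
  match N with O => 0%R | S M => (rsum g M + g (S M))%R end.

Lemma rsum_nonneg g N : (forall n, 0 <= g n)%R -> (0 <= rsum g N)%R.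
Proof. intros H. induction N; simpl; [lra|]. specialize (H (S N)). lra. Qed.

Lemma rsum_le g h N :
  (forall n, (1 <= n <= N)%nat -> (g n <= h n)%R) -> (rsum g N <= rsum h N)%R.
Proof.
  induction N; intros H; simpl; [lra|].
  assert (rsum g N <= rsum h N)%R by (apply IHN; intros; apply H; lia).
  specialize (H (S N) ltac:(lia)). lra.
Qed.

Lemma rsum_geom_tail (K r : R) N k : (0 <= K)%R -> (0 <= r < 1)%R ->
  (rsum (fun n => K * r ^ (N + n)) k <= K * r ^ (S N) / (1 - r))%R.
Proof.
  intros HK Hr.
  assert (Heq : forall j,
    ((1 - r) * rsum (fun n => r ^ (N + n)) j = r ^ (S N) - r ^ (S (N + j)))%R).
  { induction j; simpl.
    - rewrite Nat.add_0_r. ring.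
    - replace (N + S j)%nat with (S (N + j)) by lia. simpl.
      rewrite Rmult_plus_distr_l, IHj. simpl. ring. }
  assert (Hk : (rsum (fun n => K * r ^ (N + n)) k = K * rsum (fun n => r ^ (N + n)) k)%R).
  { induction k; simpl; [ring|]. rewrite IHk. ring. }
  rewrite Hk. specialize (Heq k).
  assert (0 <= r ^ S (N + k))%R by (apply pow_le; lra).
  assert (rsum (fun n => r ^ (N + n)) k <= r ^ S N / (1 - r))%R.
  { apply (Rmult_le_reg_l (1 - r)). lra. rewrite Heq.
    replace ((1 - r) * (r ^ S N / (1 - r)))%R with (r ^ S N)%R by (field; lra). lra. }
  replace (K * r ^ S N / (1 - r))%R with (K * (r ^ S N / (1 - r)))%R by (field; lra).
  apply Rmult_le_compat_l; auto.
Qed.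

Fixpoint sum_lt (f : nat -> C) (n : nat) : C :=
  match n with O => 0 | S m => sum_lt f m + f m end.

Lemma sum_lt_S f n : sum_lt f (S n) = sum_lt f n + f n.
Proof. reflexivity. Qed.

Lemma sum_lt_shift f n : sum_lt f (S n) = f 0%nat + sum_lt (fun i => f (S i)) n.
Proof. induction n. simpl. ring. rewrite sum_lt_S, IHn. simpl. ring. Qed.

Lemma sum_lt_plus f g n : sum_lt (fun i => f i + g i) n = sum_lt f n + sum_lt g n.
Proof. induction n; simpl. ring. rewrite IHn. ring. Qed.

Lemma sum_lt_mul_r f c n : sum_lt (fun i => f i * c) n = sum_lt f n * c.
Proof. induction n; simpl. ring. rewrite IHn. ring. Qed.

Lemma sum_lt_ext f g n : (forall i, (i < n)%nat -> f i = g i) -> sum_lt f n = sum_lt g n.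
Proof.
  induction n; intros H; simpl; auto.
  rewrite IHn by (intros; apply H; lia). rewrite H by lia. reflexivity.
Qed.

Fixpoint sum_1to (g : nat -> C) (n : nat) : C :=
  match n with O => 0 | S m => sum_1to g m + g (S m) end.

Lemma sum_1to_S g n : sum_1to g (S n) = sum_1to g n + g (S n).
Proof. reflexivity. Qed.

Lemma sum_1to_ext g h n :
  (forall k, (1 <= k <= n)%nat -> g k = h k) -> sum_1to g n = sum_1to h n.
Proof.
  induction n; intros H; simpl; auto.
  rewrite IHn by (intros; apply H; lia). rewrite H by lia. reflexivity.
Qed.

Lemma Cmod_sum_1to_le g n : (Cmod (sum_1to g n) <= rsum (fun k => Cmod (g k)) n)%R.
Proof. induction n; simpl. rewrite Cmod_0; lra. eapply Rle_trans. apply Cmod_triangle. lra. Qed.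

Lemma sum_1to_split g J m :
  sum_1to g (J + m) = sum_1to g J + sum_1to (fun k => g (J + k)%nat) m.
Proof.
  induction m; simpl.
  - rewrite Nat.add_0_r. ring.
  - replace (J + S m)%nat with (S (J + m)) by lia. simpl. rewrite IHm. ring.
Qed.

Lemma sum_1to_center (x y u v : nat -> C) (l : C) n :
  sum_1to (fun k => x k * u k + y k * v k) n =
  l * sum_1to (fun k => u k + v k) n
  + sum_1to (fun k => (x k - l) * u k) n + sum_1to (fun k => (y k - l) * v k) n.
Proof. induction n; simpl. ring. rewrite IHn. ring. Qed.

Lemma rsum_const c n : rsum (fun _ => c) n = (INR n * c)%R.
Proof. induction n; simpl rsum. simpl; ring. rewrite IHn, S_INR. ring. Qed.

Lemma sum_lt_symmetric F n : sum_lt F (S (2 * n)) =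
  F n + sum_1to (fun k => F (n + k)%nat + F (n - k)%nat) n.
Proof.
  assert (H : forall m, sum_lt (fun i => F (m + i)%nat) (S (2 * n)) =
    F (m + n)%nat + sum_1to (fun k => F (m + n + k)%nat + F (m + n - k)%nat) n).
  { induction n; intros m.
    - simpl. rewrite !Nat.add_0_r. ring.
    - replace (2 * S n)%nat with (S (S (2 * n))) by lia.
      rewrite sum_lt_shift, sum_lt_S.
      rewrite (sum_lt_ext (fun i => F (m + S i)%nat) (fun i => F (S m + i)%nat))
        by (intros; f_equal; lia).
      rewrite IHn. rewrite sum_1to_S.
      rewrite (sum_1to_ext (fun k => F (S m + n + k)%nat + F (S m + n - k)%nat)
         (fun k => F (m + S n + k)%nat + F (m + S n - k)%nat)) by (intros; f_equal; f_equal; lia).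
      replace (S m + n)%nat with (m + S n)%nat by lia.
      replace (m + S (S (2 * n)))%nat with (m + S n + S n)%nat by lia.
      replace (m + 0)%nat with (m + S n - S n)%nat by lia.
      ring. }
  exact (H 0%nat).
Qed.

Lemma pprod_0 f : pprod f 0 = 1.
Proof. reflexivity. Qed.

Lemma pprod_S f n : pprod f (S n) = pprod f n * f (S n).
Proof. reflexivity. Qed.

Lemma pprod_add f N k : pprod f (N + k) = pprod f N * pprod (fun n => f (N + n)%nat) k.
Proof.
  induction k; simpl.
  - rewrite Nat.add_0_r. ring.
  - replace (N + S k)%nat with (S (N + k)) by lia. simpl. rewrite IHk. ring.
Qed.

Lemma pprod_mult f g N : pprod (fun n => f n * g n) N = pprod f N * pprod g N.
Proof. induction N; simpl. ring. rewrite IHN. ring. Qed.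

Lemma pprod_ext f g N : (forall n, (1 <= n <= N)%nat -> f n = g n) -> pprod f N = pprod g N.
Proof.
  induction N; intros H; simpl; auto.
  rewrite IHN by (intros; apply H; lia). rewrite H by lia. reflexivity.
Qed.

Lemma pprod_bounds f k :
  (Cmod (pprod f k) <= exp (rsum (fun n => Cmod (f n - 1)) k))%R /\
  (Cmod (pprod f k - 1)
     <= rsum (fun n => Cmod (f n - 1)) k * exp (rsum (fun n => Cmod (f n - 1)) k))%R.
Proof.
  induction k; simpl.
  - rewrite exp_0. replace (1 - 1) with (RtoC 0) by ring. rewrite Cmod_0, Cmod_1. lra.
  - destruct IHk as [H1 H2].
    set (s := rsum (fun n => Cmod (f n - 1)) k) in *.
    set (a := Cmod (f (S k) - 1)).
    assert (Ha : (0 <= a)%R) by apply Cmod_ge_0.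
    assert (Hs : (0 <= s)%R) by (apply rsum_nonneg; intros; apply Cmod_ge_0).
    assert (Hf : (Cmod (f (S k)) <= 1 + a)%R) by apply Cmod_le_1plus.
    assert (He : (1 + a <= exp a)%R) by apply exp_ineq1_le.
    rewrite exp_plus. split.
    + rewrite Cmod_mult. pose proof (Cmod_ge_0 (pprod f k)).
      apply Rmult_le_compat; auto. apply Cmod_ge_0. lra.
    + replace (pprod f k * f (S k) - 1) with ((pprod f k - 1) * f (S k) + (f (S k) - 1)) by ring.
      eapply Rle_trans. apply Cmod_triangle. rewrite Cmod_mult. fold a.
      pose proof (Cmod_ge_0 (pprod f k - 1)).
      assert (Cmod (pprod f k - 1) * Cmod (f (S k)) <= s * exp s * (1 + a))%R.
      { apply Rmult_le_compat; auto. apply Cmod_ge_0. }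
      assert (1 <= exp s)%R. { pose proof (exp_ineq1_le s). lra. }
      assert (1 <= exp a)%R. { lra. }
      pose proof (exp_pos s). pose proof (exp_pos a).
      assert (s * exp s * (1 + a) <= s * (exp s * exp a))%R.
      { rewrite Rmult_assoc. apply Rmult_le_compat_l; auto. apply Rmult_le_compat_l; lra. }
      assert (a <= a * (exp s * exp a))%R.
      { rewrite <- (Rmult_1_r a) at 1. apply Rmult_le_compat_l; auto. nra. }
      lra.
Qed.

Lemma one_add_neq0 w : (Cmod w < 1)%R -> 1 + w <> 0.
Proof.
  intros Hw Hz. replace w with (- (1 - (1 + w))) in Hw by ring.
  rewrite Hz, Cmod_opp in Hw. replace (1 - 0) with (RtoC 1) in Hw by ring.
  rewrite Cmod_1 in Hw. lra.
Qed.

Lemma Cmod_inv_one_add_sub1 w m : (Cmod w <= m)%R -> (m < 1)%R ->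
  (Cmod (/ (1 + w) - 1) <= Cmod w / (1 - m))%R.
Proof.
  intros Hw Hm. assert (Hnz : 1 + w <> 0) by (apply one_add_neq0; lra).
  pose proof (Cmod_reverse_triangle 1 (- w)) as H.
  rewrite Cmod_1, Cmod_opp in H. replace (1 - - w) with (1 + w) in H by ring.
  replace (/ (1 + w) - 1) with (- w / (1 + w)) by (field; auto).
  rewrite Cmod_div, Cmod_opp by auto. unfold Rdiv.
  apply Rmult_le_compat_l; [apply Cmod_ge_0 | apply Rinv_le_contravar; lra].
Qed.

Lemma pprod_neq0 (f : nat -> C) N : (forall n, (1 <= n <= N)%nat -> f n <> 0) -> pprod f N <> 0.
Proof.
  induction N; intros H; simpl.
  - intros Hz; injection Hz; lra.
  - apply Cmult_neq_0; [apply IHN; intros; apply H | apply H]; lia.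
Qed.

Lemma Cmod_cexp_natC_mul n A : Cmod (E (natC n * A)) = (exp (Re A) ^ n)%R.
Proof. rewrite Cmod_cexp, Re_natC_mul. apply exp_nat_mul. Qed.

Lemma pow_le_base r n : (0 <= r <= 1)%R -> (1 <= n)%nat -> (r ^ n <= r)%R.
Proof.
  intros Hr Hn. destruct n as [|n]; [lia|]. simpl.
  pose proof (pow_le r n ltac:(lra)). pose proof (pow_incr r 1 n ltac:(lra)).
  rewrite pow1 in *. nra.
Qed.

Lemma one_add_cexp_neq0 A (s : C) n : (Re A < 0)%R -> Cmod s = 1%R -> (1 <= n)%nat ->
  1 + s * E (natC n * A) <> 0.
Proof.
  intros HA Hs Hn. apply one_add_neq0. rewrite Cmod_mult, Hs, Rmult_1_l, Cmod_cexp_natC_mul.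
  pose proof (exp_lt1_of_neg _ HA). eapply Rle_lt_trans; [apply pow_le_base; auto; lra|]. lra.
Qed.

Lemma rsum_tail_of_geometric (a : nat -> R) (K r : R) : (0 <= K)%R -> (0 <= r < 1)%R ->
  (forall n, (1 <= n)%nat -> (a n <= K * r ^ n)%R) ->
  forall n k, (rsum (fun j => a (n + j)%nat) k <= K * r ^ n / (1 - r))%R.
Proof.
  intros HK Hr Ha n k. eapply Rle_trans.
  - apply (rsum_le _ (fun j => K * r ^ (n + j))%R). intros j Hj. apply Ha. lia.
  - eapply Rle_trans; [apply rsum_geom_tail; auto|]. simpl.
    unfold Rdiv. apply Rmult_le_compat_r; [left; apply Rinv_0_lt_compat; lra|].
    assert (0 <= K * r ^ n)%R by (apply Rmult_le_pos; [|apply pow_le]; lra). nra.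
Qed.

Lemma pprod_cv_of_geometric f (K r : R) : (0 <= K)%R -> (0 <= r < 1)%R ->
  (forall n, (1 <= n)%nat -> (Cmod (f n - 1) <= K * r ^ n)%R) ->
  exists P, cv (pprod f) P.
Proof.
  intros HK Hr Hf.
  set (s0 := (K / (1 - r))%R).
  assert (Hrn : forall n, (r ^ n <= 1)%R) by (intros; rewrite <- (pow1 n); apply pow_incr; lra).
  pose proof (rsum_tail_of_geometric (fun n => Cmod (f n - 1)) K r HK Hr Hf) as Htail.
  assert (Hts0 : forall n k, (rsum (fun j => Cmod (f (n + j)%nat - 1)) k <= s0)%R).
  { intros n k. eapply Rle_trans. apply Htail. unfold s0, Rdiv.
    apply Rmult_le_compat_r. left; apply Rinv_0_lt_compat; lra.
    specialize (Hrn n). nra. }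
  assert (HB : forall n, (Cmod (pprod f n) <= exp s0)%R).
  { intros n. eapply Rle_trans. apply pprod_bounds. apply exp_le_compat.
    specialize (Hts0 0%nat n). simpl in Hts0. exact Hts0. }
  assert (Hd : forall n k, (Cmod (pprod f (n + k) - pprod f n) <=
      exp s0 * exp s0 * (K / (1 - r)) * r ^ n)%R).
  { intros n k. rewrite pprod_add.
    replace (pprod f n * pprod (fun n0 : nat => f (n + n0)%nat) k - pprod f n)
      with (pprod f n * (pprod (fun n0 : nat => f (n + n0)%nat) k - 1)) by ring.
    rewrite Cmod_mult.
    destruct (pprod_bounds (fun n0 : nat => f (n + n0)%nat) k) as [_ H2].
    set (t := rsum (fun n0 : nat => Cmod (f (n + n0)%nat - 1)) k) in *.
    assert (Ht0 : (0 <= t)%R) by (apply rsum_nonneg; intros; apply Cmod_ge_0).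
    assert (Ht1 : (t <= K * r ^ n / (1 - r))%R) by apply Htail.
    assert (Ht2 : (exp t <= exp s0)%R) by (apply exp_le_compat; apply Hts0).
    assert (Ht3 : (t * exp t <= K * r ^ n / (1 - r) * exp s0)%R).
    { apply Rmult_le_compat; auto. left; apply exp_pos. }
    pose proof (Cmod_ge_0 (pprod f n)).
    eapply Rle_trans.
    { apply Rmult_le_compat. apply Cmod_ge_0. apply Cmod_ge_0. apply HB.
      eapply Rle_trans. exact H2. exact Ht3. }
    right. field. lra. }
  exact (cv_ex_of_geometric_increments _ _ r Hr Hd).
Qed.

Lemma pprod_lim_neq0_of_inverse f g P Q : (forall n, (1 <= n)%nat -> f n * g n = 1) ->
  cv (pprod f) P -> cv (pprod g) Q -> P <> 0.
Proof.
  intros Hfg HP HQ.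
  assert (H1 : cv (fun n => pprod f n * pprod g n) (P * Q)) by (apply cv_mult; auto).
  assert (H2 : forall n, pprod f n * pprod g n = 1).
  { intros n. rewrite <- pprod_mult. induction n; simpl; auto. rewrite IHn, Hfg by lia. ring. }
  assert (P * Q = 1).
  { apply (cv_unique (fun n => pprod f n * pprod g n)); auto.
    eapply cv_ext; [|apply cv_const]. intros; simpl; rewrite H2; auto. }
  intros HP0. rewrite HP0 in H. assert (RtoC 0 = RtoC 1) by (rewrite <- H; ring).
  injection H0. lra.
Qed.

(** [eprod c d] is the infinite product of [1 + e^(c + n d)] over [n >= 1]; it is
    the limit of the partial products when [Re d < 0], and meaningless otherwise. *)
Definition eprod_part (c d : C) (N : nat) : C := pprod (fun n => 1 + E (c + natC n * d)) N.

Definition eprod (c d : C) : C := epsilon (inhabits (RtoC 0)) (fun P => cv (eprod_part c d) P).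

Lemma Cmod_cexp_affine c d n : Cmod (E (c + natC n * d)) = (exp (Re c) * exp (Re d) ^ n)%R.
Proof. rewrite Cmod_cexp, re_plus, Re_natC_mul, exp_plus, exp_nat_mul. auto. Qed.

Lemma eprod_part_cv_ex c d : (Re d < 0)%R -> exists P, cv (eprod_part c d) P.
Proof.
  intros Hd. apply (pprod_cv_of_geometric _ (exp (Re c)) (exp (Re d))).
  - left; apply exp_pos.
  - split. left; apply exp_pos. rewrite <- exp_0. apply exp_increasing. auto.
  - intros n Hn. replace (1 + E (c + natC n * d) - 1) with (E (c + natC n * d)) by ring.
    rewrite Cmod_cexp_affine. lra.
Qed.

Lemma eprod_cv c d : (Re d < 0)%R -> cv (eprod_part c d) (eprod c d).
Proof. intros Hd. unfold eprod. apply epsilon_spec. apply eprod_part_cv_ex; auto. Qed.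

Lemma eprod_neq0 c d : (Re d < 0)%R -> (Re c + Re d < 0)%R -> eprod c d <> 0.
Proof.
  intros Hd Hcd. pose proof (exp_lt1_of_neg _ Hcd) as Hm.
  pose proof (exp_lt1_of_neg _ Hd) as Hr.
  set (m := exp (Re c + Re d)) in *.
  assert (HE : forall n, (1 <= n)%nat -> (Cmod (E (c + natC n * d)) <= m)%R).
  { intros n Hn. rewrite Cmod_cexp, re_plus, Re_natC_mul. apply exp_le_compat.
    assert (1 <= INR n)%R by (apply (le_INR 1); auto). nra. }
  destruct (pprod_cv_of_geometric (fun n => / (1 + E (c + natC n * d)))
              (exp (Re c) / (1 - m)) (exp (Re d))) as [Q HQ]; auto.
  - apply Rdiv_le_0_compat; [left; apply exp_pos | lra].
  - intros n Hn. eapply Rle_trans; [apply Cmod_inv_one_add_sub1; auto; lra|].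
    rewrite Cmod_cexp_affine. right. field. lra.
  - refine (pprod_lim_neq0_of_inverse _ _ _ Q _ (eprod_cv c d Hd) HQ).
    intros n Hn. field. apply one_add_neq0. specialize (HE n Hn). lra.
Qed.

Lemma eprod_cexp_ext c d c' d' : E c = E c' -> E d = E d' -> eprod c d = eprod c' d'.
Proof.
  intros Hc Hd.
  assert (H : eprod_part c d = eprod_part c' d').
  { apply functional_extensionality. intros N. unfold eprod_part. apply pprod_ext. intros n _.
    rewrite !cexp_add, !cexp_natC_mul, Hc, Hd. auto. }
  unfold eprod. rewrite H. auto.
Qed.

Lemma eprod_split_parity c d : (Re d < 0)%R -> eprod c d = eprod (c - d) (2 * d) * eprod c (2 * d).
Proof.
  intros Hd.
  assert (Hd2 : (Re (2 * d) < 0)%R) by Re_lt0.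
  assert (Hf : forall N,
    eprod_part c d (2 * N) = eprod_part (c - d) (2 * d) N * eprod_part c (2 * d) N).
  { induction N; [unfold eprod_part; simpl; ring|].
    replace (2 * S N)%nat with (S (S (2 * N))) by lia.
    unfold eprod_part in *. rewrite !pprod_S, IHN.
    replace (c + natC (S (2 * N)) * d) with (c - d + natC (S N) * (2 * d)) by (natC_simpl; ring).
    replace (c + natC (S (S (2 * N))) * d) with (c + natC (S N) * (2 * d)) by (natC_simpl; ring).
    ring. }
  apply (cv_unique (fun N => eprod_part c d (2 * N))).
  - apply (cv_subseq_ge (eprod_part c d)). intros; lia. apply eprod_cv; auto.
  - eapply cv_ext. intros n. symmetry. apply Hf.
    apply cv_mult; apply eprod_cv; auto.
Qed.

Lemma eprod_mul_shift_ipi c d : (Re d < 0)%R ->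
  eprod c d * eprod (c + ipi) d = eprod (2 * c + ipi) (2 * d).
Proof.
  intros Hd.
  assert (Hd2 : (Re (2 * d) < 0)%R) by Re_lt0.
  assert (Hf : forall N,
    eprod_part c d N * eprod_part (c + ipi) d N = eprod_part (2 * c + ipi) (2 * d) N).
  { intros N. unfold eprod_part. rewrite <- pprod_mult. apply pprod_ext. intros n _.
    replace (c + ipi + natC n * d) with ((c + natC n * d) + ipi) by ring.
    replace (2 * c + ipi + natC n * (2 * d)) with ((c + natC n * d) + (c + natC n * d) + ipi)
      by ring.
    set (x := c + natC n * d). rewrite !cexp_add_ipi, (cexp_add x x). ring. }
  apply (cv_unique (fun N => eprod_part c d N * eprod_part (c + ipi) d N)).
  - apply cv_mult; apply eprod_cv; auto.
  - eapply cv_ext. intros n. symmetry. apply Hf. apply eprod_cv; auto.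
Qed.

Lemma eprod_shift c d : (Re d < 0)%R -> eprod c d = (1 + E (c + d)) * eprod (c + d) d.
Proof.
  intros Hd.
  assert (Hf : forall N, eprod_part c d (S N) = (1 + E (c + d)) * eprod_part (c + d) d N).
  { induction N.
    - unfold eprod_part; simpl. replace (c + natC 1 * d) with (c + d) by (natC_simpl; ring). ring.
    - unfold eprod_part in *. rewrite pprod_S, IHN, pprod_S.
      replace (c + natC (S (S N)) * d) with (c + d + natC (S N) * d) by (natC_simpl; ring). ring. }
  apply (cv_unique (fun N => eprod_part c d (N + 1))).
  - apply cv_shift. apply eprod_cv; auto.
  - eapply cv_ext. intros n. rewrite Nat.add_1_r. symmetry. apply Hf.
    apply cv_scal. apply eprod_cv; auto.
Qed.

(** * Theta series *)

Definition theta_term (a b : C) (k : nat) : C := E (natC k * natC k * a + natC k * b).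

Fixpoint theta_part (a b : C) (n : nat) : C :=
  match n with
  | O => 1
  | S m => theta_part a b m + theta_term a b (S m) + theta_term a (- b) (S m)
  end.

Lemma theta_part_S a b m :
  theta_part a b (S m) = theta_part a b m + theta_term a b (S m) + theta_term a (- b) (S m).
Proof. reflexivity. Qed.

(** [theta a b] is [sum_(k in Z) e^(k^2 a + k b)]; it is the limit of [theta_part a b]
    when [Re a < 0], and meaningless otherwise. *)
Definition theta (a b : C) : C := epsilon (inhabits (RtoC 0)) (fun s => cv (theta_part a b) s).

(** Completing the square: [k^2 a + k b <= (b - a)^2 / (-4 a) + k a] for real [a < 0]. *)
Lemma theta_term_bound a b : (Re a < 0)%R ->
  exists K, (0 <= K)%R /\ forall k, (Cmod (theta_term a b k) <= K * exp (Re a) ^ k)%R.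
Proof.
  intros Ha. exists (exp ((Re b - Re a) ^ 2 / (- 4 * Re a))). split; [left; apply exp_pos|].
  intros k. unfold theta_term. rewrite Cmod_cexp, re_plus, !re_mult.
  unfold natC. rewrite !re_RtoC. simpl Im. rewrite <- exp_nat_mul, <- exp_plus.
  apply exp_le_compat. set (x := INR k). set (al := Re a). set (be := Re b).
  replace (x * x * al - 0 * Im a + (x * be - 0 * Im b))%R with (x * x * al + x * be)%R by ring.
  assert (H : (x * x * al + x * be - ((be - al) ^ 2 / (- 4 * al) + x * al) =
     - (2 * al * x + (be - al)) ^ 2 / (- 4 * al))%R).
  { field. unfold al; lra. }
  assert (H2 : (0 <= (2 * al * x + (be - al)) ^ 2 / (- 4 * al))%R).
  { apply Rdiv_le_0_compat. apply pow2_ge_0. unfold al; lra. }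
  unfold Rdiv in *. lra.
Qed.

Lemma theta_part_diff_bound a b n k : (Cmod (theta_part a b (n + k) - theta_part a b n) <=
   rsum (fun j => Cmod (theta_term a b (n + j)) + Cmod (theta_term a (- b) (n + j)))%R k)%R.
Proof.
  induction k; simpl.
  - rewrite Nat.add_0_r. replace (theta_part a b n - theta_part a b n) with (RtoC 0) by ring.
    rewrite Cmod_0. lra.
  - replace (n + S k)%nat with (S (n + k)) by lia. simpl.
    set (t := theta_term a b (S (n + k))). set (t' := theta_term a (- b) (S (n + k))).
    replace (theta_part a b (n + k) + t + t' - theta_part a b n)
      with ((theta_part a b (n + k) - theta_part a b n) + t + t') by ring.
    eapply Rle_trans; [apply Cmod_triangle|].
    eapply Rle_trans; [apply Rplus_le_compat_r, Cmod_triangle|]. lra.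
Qed.

Lemma theta_part_cv_ex a b : (Re a < 0)%R -> exists s, cv (theta_part a b) s.
Proof.
  intros Ha. pose proof (exp_lt1_of_neg _ Ha) as Hr.
  destruct (theta_term_bound a b Ha) as [K1 [HK1 H1]].
  destruct (theta_term_bound a (- b) Ha) as [K2 [HK2 H2]].
  apply (cv_ex_of_geometric_increments _ ((K1 + K2) / (1 - exp (Re a))) _ Hr). intros n k.
  eapply Rle_trans; [apply theta_part_diff_bound|].
  eapply Rle_trans.
  - apply (rsum_tail_of_geometric (fun j => Cmod (theta_term a b j) + Cmod (theta_term a (- b) j))%R
                                  (K1 + K2) (exp (Re a))); auto; [lra|].
    intros j _. rewrite Rmult_plus_distr_r. apply Rplus_le_compat; auto.
  - right. field. lra.
Qed.

Lemma theta_cv a b : (Re a < 0)%R -> cv (theta_part a b) (theta a b).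
Proof. intros Ha. unfold theta. apply epsilon_spec. apply theta_part_cv_ex; auto. Qed.

Lemma theta_term_cv0 a b : (Re a < 0)%R -> cv (theta_term a b) 0.
Proof.
  intros Ha. destruct (theta_term_bound a b Ha) as [K [HK HKb]].
  apply (cv_dominated _ _ (fun n => K * exp (Re a) ^ n)%R).
  - exists 0%nat. intros n _. replace (theta_term a b n - 0) with (theta_term a b n) by ring.
    auto.
  - apply geom_eventually_small, exp_lt1_of_neg, Ha.
Qed.

Lemma theta_part_dissect a b n :
  theta_part a b (2 * n + 1) =
  theta_part (4 * a) (2 * b) n
  + E (a + b) * (theta_part (4 * a) (4 * a + 2 * b) n
                 + theta_term (4 * a) (- (4 * a + 2 * b)) (S n)).
Proof.
  induction n.
  - simpl. unfold theta_term.
    replace (E (natC 1 * natC 1 * a + natC 1 * b)) with (E (a + b)) by (f_equal; natC_simpl; ring).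
    replace (E (natC 1 * natC 1 * a + natC 1 * - b))
      with (E (a + b) * E (natC 1 * natC 1 * (4 * a) + natC 1 * - (4 * a + 2 * b)))
      by (rewrite <- cexp_add; f_equal; natC_simpl; ring).
    ring.
  - replace (2 * S n + 1)%nat with (S (S (2 * n + 1))) by lia.
    rewrite !theta_part_S, IHn.
    unfold theta_term.
    replace (natC (S (2 * n + 1)) * natC (S (2 * n + 1)) * a + natC (S (2 * n + 1)) * b)
      with (natC (S n) * natC (S n) * (4 * a) + natC (S n) * (2 * b)) by (natC_simpl; ring).
    replace (natC (S (2 * n + 1)) * natC (S (2 * n + 1)) * a + natC (S (2 * n + 1)) * - b)
      with (natC (S n) * natC (S n) * (4 * a) + natC (S n) * - (2 * b)) by (natC_simpl; ring).
    replace (natC (S (S (2 * n + 1))) * natC (S (S (2 * n + 1))) * a +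
             natC (S (S (2 * n + 1))) * b)
      with (a + b + (natC (S n) * natC (S n) * (4 * a) + natC (S n) * (4 * a + 2 * b)))
      by (natC_simpl; ring).
    replace (natC (S (S (2 * n + 1))) * natC (S (S (2 * n + 1))) * a +
             natC (S (S (2 * n + 1))) * - b)
      with (a + b + (natC (S (S n)) * natC (S (S n)) * (4 * a) +
             natC (S (S n)) * - (4 * a + 2 * b)))
      by (natC_simpl; ring).
    rewrite !cexp_add. ring.
Qed.

(** The even [k] give the first series and the odd [k] the second. *)
Lemma theta_dissect a b : (Re a < 0)%R ->
  theta a b = theta (4 * a) (2 * b) + E (a + b) * theta (4 * a) (4 * a + 2 * b).
Proof.
  intros Ha. assert (Ha4 : (Re (4 * a) < 0)%R) by Re_lt0.
  apply (cv_unique (fun n => theta_part a b (2 * n + 1))).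
  - apply (cv_subseq_ge (theta_part a b)); [intros; lia | apply theta_cv; auto].
  - eapply cv_ext; [intros n; symmetry; apply theta_part_dissect|].
    replace (theta (4 * a) (2 * b) + E (a + b) * theta (4 * a) (4 * a + 2 * b))
      with (theta (4 * a) (2 * b) + E (a + b) * (theta (4 * a) (4 * a + 2 * b) + 0)) by ring.
    apply cv_plus; [apply theta_cv; auto|].
    apply cv_scal, cv_plus; [apply theta_cv; auto|].
    eapply cv_ext; [intros n; rewrite <- Nat.add_1_r; reflexivity|].
    apply cv_shift, theta_term_cv0; auto.
Qed.

Lemma theta_part_sum_1to a b n :
  theta_part a b n = 1 + sum_1to (fun k => theta_term a b k + theta_term a (- b) k) n.
Proof. induction n; simpl; [ring|]. rewrite IHn. ring. Qed.

(** * Gaussian binomial coefficients *)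

Section GaussianBinomial.
Variable Q : C.
Hypothesis HQ : forall k, (1 <= k)%nat -> 1 - Q ^ k <> 0.

Definition qpoch (m : nat) : C := pprod (fun k => 1 - Q ^ k) m.

Lemma qpoch_S m : qpoch (S m) = qpoch m * (1 - Q ^ (S m)).
Proof. reflexivity. Qed.

Lemma qpoch_neq0 m : qpoch m <> 0.
Proof.
  induction m.
  - unfold qpoch; simpl. intros H; injection H; lra.
  - rewrite qpoch_S. apply Cmult_neq_0; auto. apply HQ; lia.
Qed.

Definition qbinom (M i : nat) : C :=
  if (i <=? M)%nat then qpoch M / (qpoch i * qpoch (M - i)) else 0.

Lemma qbinom_le M i : (i <= M)%nat -> qbinom M i = qpoch M / (qpoch i * qpoch (M - i)).
Proof. intros H. unfold qbinom. destruct (Nat.leb_spec i M); auto. lia. Qed.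

Lemma qbinom_gt M i : (M < i)%nat -> qbinom M i = 0.
Proof. intros H. unfold qbinom. destruct (Nat.leb_spec i M); auto. lia. Qed.

Lemma qbinom_0_r M : qbinom M 0 = 1.
Proof.
  rewrite qbinom_le, Nat.sub_0_r by lia. unfold qpoch at 2. simpl.
  field. apply qpoch_neq0.
Qed.

Lemma qbinom_diag M : qbinom M M = 1.
Proof.
  rewrite qbinom_le, Nat.sub_diag by lia. unfold qpoch at 3. simpl.
  field. apply qpoch_neq0.
Qed.

Lemma qbinom_sym M i : (i <= M)%nat -> qbinom M (M - i) = qbinom M i.
Proof.
  intros H. rewrite !qbinom_le by lia.
  replace (M - (M - i))%nat with i by lia. rewrite Cmult_comm. reflexivity.
Qed.

Lemma qbinom_pascal M i : qbinom (S M) (S i) = qbinom M i + Q ^ (S i) * qbinom M (S i).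
Proof.
  destruct (Compare_dec.lt_eq_lt_dec i M) as [[Hlt|Heq]|Hgt].
  - destruct (Nat.le_exists_sub (S i) M ltac:(lia)) as [j [Hj _]]. subst M.
    rewrite !qbinom_le by lia.
    replace (S (j + S i) - S i)%nat with (S j) by lia.
    replace (j + S i - i)%nat with (S j) by lia.
    replace (j + S i - S i)%nat with j by lia.
    rewrite (qpoch_S (j + S i)), (qpoch_S i), (qpoch_S j).
    replace (Q ^ S (j + S i)) with (Q ^ S j * Q ^ S i) by (rewrite <- Cpow_add_r; f_equal; lia).
    pose proof (qpoch_neq0 i). pose proof (qpoch_neq0 j). pose proof (qpoch_neq0 (j + S i)).
    pose proof (HQ (S i) ltac:(lia)). pose proof (HQ (S j) ltac:(lia)).
    field. auto.
  - subst. rewrite !qbinom_diag, qbinom_gt by lia. ring.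
  - rewrite !qbinom_gt by lia. ring.
Qed.

Lemma qbinom_pascal_rev M i : qbinom (S M) (S i) = Q ^ (M - i) * qbinom M i + qbinom M (S i).
Proof.
  destruct (Compare_dec.lt_eq_lt_dec i M) as [[Hlt|Heq]|Hgt].
  - rewrite <- (qbinom_sym (S M) (S i)) by lia.
    replace (S M - S i)%nat with (S (M - S i)) by lia. rewrite qbinom_pascal.
    replace (S (M - S i)) with (M - i)%nat by lia.
    rewrite !qbinom_sym by lia. ring.
  - subst. rewrite !qbinom_diag, qbinom_gt, Nat.sub_diag by lia. simpl. ring.
  - rewrite !qbinom_gt by lia. ring.
Qed.

Lemma sum_qbinom_pascal M f : sum_lt (fun i => qbinom (S M) i * f i) (S (S M)) =
  sum_lt (fun i => qbinom M i * (f (S i) + Q ^ i * f i)) (S M).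
Proof.
  rewrite sum_lt_shift, qbinom_0_r.
  rewrite (sum_lt_ext _ (fun i => qbinom M i * f (S i) + Q ^ (S i) * qbinom M (S i) * f (S i)))
    by (intros; rewrite qbinom_pascal; ring).
  rewrite sum_lt_plus.
  rewrite (sum_lt_ext (fun i => qbinom M i * (f (S i) + Q ^ i * f i))
     (fun i => qbinom M i * f (S i) + Q ^ i * qbinom M i * f i)) by (intros; ring).
  rewrite sum_lt_plus.
  set (Y := fun i => Q ^ i * qbinom M i * f i).
  change (sum_lt (fun i => Q ^ S i * qbinom M (S i) * f (S i)) (S M))
    with (sum_lt (fun i => Y (S i)) (S M)).
  assert (H : sum_lt Y (S (S M)) = sum_lt Y (S M)).
  { rewrite sum_lt_S. unfold Y at 2. rewrite qbinom_gt by lia. ring. }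
  rewrite sum_lt_shift in H. unfold Y at 1 in H. rewrite qbinom_0_r in H.
  replace (Q ^ 0) with (RtoC 1) in H by reflexivity.
  rewrite <- H. ring.
Qed.

Lemma sum_qbinom_pascal_rev M f : sum_lt (fun i => qbinom (S M) i * f i) (S (S M)) =
  sum_lt (fun i => qbinom M i * (Q ^ (M - i) * f (S i) + f i)) (S M).
Proof.
  rewrite sum_lt_shift, qbinom_0_r.
  rewrite (sum_lt_ext _ (fun i => Q ^ (M - i) * qbinom M i * f (S i) + qbinom M (S i) * f (S i)))
    by (intros; rewrite qbinom_pascal_rev; ring).
  rewrite sum_lt_plus.
  rewrite (sum_lt_ext (fun i => qbinom M i * (Q ^ (M - i) * f (S i) + f i))
     (fun i => Q ^ (M - i) * qbinom M i * f (S i) + qbinom M i * f i)) by (intros; ring).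
  rewrite sum_lt_plus.
  set (Y := fun i => qbinom M i * f i).
  change (sum_lt (fun i => qbinom M (S i) * f (S i)) (S M))
    with (sum_lt (fun i => Y (S i)) (S M)).
  assert (H : sum_lt Y (S (S M)) = sum_lt Y (S M)).
  { rewrite sum_lt_S. unfold Y at 2. rewrite qbinom_gt by lia. ring. }
  rewrite sum_lt_shift in H. unfold Y at 1 in H. rewrite qbinom_0_r in H.
  rewrite <- H. ring.
Qed.

Lemma sum_qbinom_SS N f : sum_lt (fun i => qbinom (S (S N)) i * f i) (S (S (S N))) =
  sum_lt (fun i => qbinom N i * (Q ^ (N - i) * f (S (S i)) + (1 + Q ^ (S N)) * f (S i)
                                 + Q ^ i * f i)) (S N).
Proof.
  rewrite sum_qbinom_pascal.
  set (g := fun i => f (S i) + Q ^ i * f i).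
  change (sum_lt (fun i => qbinom (S N) i * (f (S i) + Q ^ i * f i)) (S (S N)))
    with (sum_lt (fun i => qbinom (S N) i * g i) (S (S N))).
  rewrite sum_qbinom_pascal_rev. apply sum_lt_ext. intros i Hi. unfold g.
  replace (Q ^ S N) with (Q ^ (N - i) * Q ^ S i) by (rewrite <- Cpow_add_r; f_equal; lia).
  ring.
Qed.

End GaussianBinomial.

(** * The finite triple product and Tannery's theorem *)

Definition triple_part (a b : C) (n : nat) : C :=
  pprod (fun k => (1 + E (b + (2 * natC k - 1) * a)) * (1 + E (- b + (2 * natC k - 1) * a))) n.

Definition theta_term_shift (a b : C) (n i : nat) : C :=
  E ((natC i - natC n) * (natC i - natC n) * a + (natC i - natC n) * b).

Lemma one_sub_cexp_pow_neq0 a : (Re a < 0)%R -> forall k, (1 <= k)%nat -> 1 - E (2 * a) ^ k <> 0.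
Proof.
  intros Ha k Hk. rewrite <- cexp_natC_mul.
  replace (1 - E (natC k * (2 * a))) with (1 + - (1) * E (natC k * (2 * a))) by ring.
  apply one_add_cexp_neq0; [Re_lt0 | rewrite Cmod_opp; apply Cmod_1 | auto].
Qed.

Lemma triple_part_qbinom a b n : (Re a < 0)%R ->
  triple_part a b n =
  sum_lt (fun i => qbinom (E (2 * a)) (2 * n) i * theta_term_shift a b n i) (S (2 * n)).
Proof.
  intros Ha. set (Q := E (2 * a)). pose proof (one_sub_cexp_pow_neq0 a Ha) as HQ. fold Q in HQ.
  induction n.
  - unfold triple_part. simpl. rewrite (qbinom_diag Q HQ 0). unfold theta_term_shift.
    replace ((natC 0 - natC 0) * (natC 0 - natC 0) * a + (natC 0 - natC 0) * b) with (RtoC 0)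
      by ring.
    rewrite cexp_0. ring.
  - unfold triple_part in *. rewrite pprod_S, IHn.
    replace (2 * S n)%nat with (S (S (2 * n))) by lia.
    rewrite (sum_qbinom_SS Q HQ), <- sum_lt_mul_r. apply sum_lt_ext. intros i Hi.
    set (t := theta_term_shift a b). set (Xp := E (b + (2 * natC (S n) - 1) * a)).
    set (Xm := E (- b + (2 * natC (S n) - 1) * a)).
    assert (H1 : Q ^ (2 * n - i) * t (S n) (S (S i)) = t n i * Xp).
    { unfold Q, t, theta_term_shift, Xp. rewrite <- cexp_natC_mul, <- !cexp_add. f_equal.
      rewrite natC_sub by lia. natC_simpl. ring. }
    assert (H2 : Q ^ S (2 * n) * t (S n) (S i) = t n i * Xp * Xm).
    { unfold Q, t, theta_term_shift, Xp, Xm. rewrite <- cexp_natC_mul, <- !cexp_add. f_equal.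
      natC_simpl. ring. }
    assert (H3 : Q ^ i * t (S n) i = t n i * Xm).
    { unfold Q, t, theta_term_shift, Xm. rewrite <- cexp_natC_mul, <- !cexp_add. f_equal.
      natC_simpl. ring. }
    assert (H4 : t (S n) (S i) = t n i) by (unfold t, theta_term_shift; f_equal; natC_simpl; ring).
    replace ((1 + Q ^ S (2 * n)) * t (S n) (S i))
      with (t (S n) (S i) + Q ^ S (2 * n) * t (S n) (S i)) by ring.
    rewrite H1, H2, H3, H4. ring.
Qed.

Lemma cv0_uniform_finite (al : nat -> nat -> C) : (forall k, cv (fun n => al n k) 0) ->
  forall J d, (0 < d)%R ->
  exists N, forall n k, (N <= n)%nat -> (k <= J)%nat -> (Cmod (al n k) < d)%R.
Proof.
  intros H J d Hd. induction J.
  - destruct (H 0%nat d Hd) as [N HN]. exists N. intros n k Hn Hk. replace k with 0%nat by lia.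
    specialize (HN n Hn). replace (al n 0%nat - 0) with (al n 0%nat) in HN by ring. auto.
  - destruct IHJ as [N1 H1]. destruct (H (S J) d Hd) as [N2 H2].
    exists (N1 + N2)%nat. intros n k Hn Hk. destruct (Nat.eq_dec k (S J)).
    + subst. specialize (H2 n ltac:(lia)).
      replace (al n (S J) - 0) with (al n (S J)) in H2 by ring. auto.
    + apply H1; lia.
Qed.

Lemma tannery (al : nat -> nat -> C) (t : nat -> C) (M K r : R) :
  (0 <= M)%R -> (0 <= K)%R -> (0 <= r < 1)%R ->
  (forall n k, (Cmod (al n k) <= M)%R) -> (forall k, cv (fun n => al n k) 0) ->
  (forall k, (Cmod (t k) <= K * r ^ k)%R) ->
  cv (fun n => sum_1to (fun k => al n k * t k) n) 0.
Proof.
  intros HM HK Hr Hb Hc Ht eps He.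
  (* Cut at [J]: the [J] head terms are small by pointwise convergence, the tail by [r^J]. *)
  destruct (geom_eventually_small r (M * K * r / (1 - r))%R Hr (eps / 2)%R ltac:(lra)) as [J HJ].
  specialize (HJ J (le_n J)).
  set (d := (eps / (2 * (INR J * K + 1)))%R).
  assert (HJK : (0 <= INR J * K)%R) by (apply Rmult_le_pos; auto; apply pos_INR).
  assert (Hd : (0 < d)%R) by (unfold d; apply Rdiv_lt_0_compat; lra).
  destruct (cv0_uniform_finite al Hc J d Hd) as [N1 HN1].
  exists (N1 + J)%nat. intros n Hn.
  replace (sum_1to (fun k => al n k * t k) n - 0) with (sum_1to (fun k => al n k * t k) n) by ring.
  replace n with (J + (n - J))%nat by lia. rewrite sum_1to_split.
  assert (Hrk : forall k, (r ^ k <= 1)%R) by (intros; rewrite <- (pow1 k); apply pow_incr; lra).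
  assert (Hrk0 : forall k, (0 <= r ^ k)%R) by (intros; apply pow_le; lra).
  assert (A1 : (Cmod (sum_1to (fun k => (al (J + (n - J))%nat k * t k)%C) J) <= INR J * (d * K))%R).
  { eapply Rle_trans. apply Cmod_sum_1to_le.
    replace (INR J * (d * K))%R with (rsum (fun _ => (d * K)%R) J) by apply rsum_const.
    apply rsum_le. intros k Hk.
    rewrite Cmod_mult. apply Rmult_le_compat. apply Cmod_ge_0. apply Cmod_ge_0.
    left. apply HN1; lia. eapply Rle_trans. apply Ht. specialize (Hrk k). nra. }
  assert (A2 : (Cmod (sum_1to (fun k => (al (J + (n - J))%nat (J + k)%nat * t (J + k)%nat)%C)
                              (n - J)) <=
      M * K * r ^ (S J) / (1 - r))%R).
  { eapply Rle_trans. apply Cmod_sum_1to_le.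
    eapply Rle_trans; [|apply (rsum_geom_tail (M * K)); auto; apply Rmult_le_pos; auto].
    apply rsum_le. intros k Hk. rewrite Cmod_mult. rewrite Rmult_assoc.
    apply Rmult_le_compat. apply Cmod_ge_0. apply Cmod_ge_0. apply Hb. apply Ht. }
  assert (A3 : (M * K * r ^ (S J) / (1 - r) = M * K * r / (1 - r) * r ^ J)%R).
  { simpl. field. lra. }
  assert (A4 : (INR J * (d * K) < eps / 2)%R).
  { unfold d. replace (INR J * (eps / (2 * (INR J * K + 1)) * K))%R with
      (eps / 2 * (INR J * K / (INR J * K + 1)))%R by (field; lra).
    assert (INR J * K / (INR J * K + 1) < 1)%R.
    { apply (Rmult_lt_reg_r (INR J * K + 1)). lra. unfold Rdiv.
      rewrite Rmult_assoc, Rinv_l by lra. lra. }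
    nra. }
  eapply Rle_lt_trans. apply Cmod_triangle. lra.
Qed.

(** * The Jacobi triple product *)

(** Since [1 + e^(ipi + x) = 1 - e^x], [tprod a b] is the triple product
    [prod_(n>=1) (1 - e^(2na)) (1 + e^(b + (2n-1)a)) (1 + e^(-b + (2n-1)a))]. *)
Definition tprod (a b : C) : C :=
  eprod ipi (2 * a) * eprod (b - a) (2 * a) * eprod (- b - a) (2 * a).

Lemma Cmod_div_mul_le (x y z : C) (B m : R) :
  (Cmod x <= B)%R -> (0 < m)%R -> (m <= Cmod y)%R -> (m <= Cmod z)%R ->
  (Cmod (x / (y * z)) <= B / (m * m))%R.
Proof.
  intros Hx Hm Hy Hz.
  assert (Hy0 : y <> 0) by (intros H; rewrite H, Cmod_0 in Hy; lra).
  assert (Hz0 : z <> 0) by (intros H; rewrite H, Cmod_0 in Hz; lra).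
  rewrite Cmod_div by (apply Cmult_neq_0; auto). rewrite Cmod_mult.
  pose proof (Cmod_ge_0 x).
  unfold Rdiv. apply Rmult_le_compat; auto. left; apply Rinv_0_lt_compat.
  apply Rmult_lt_0_compat; lra. apply Rinv_le_contravar. nra.
  apply Rmult_le_compat; lra.
Qed.

Section CentralQBinomial.
Variables Q L : C.
Hypothesis HQ : forall k, (1 <= k)%nat -> 1 - Q ^ k <> 0.
Hypothesis HL : cv (qpoch Q) L.
Hypothesis HL0 : L <> 0.

Lemma qbinom_sub_inv_bounded :
  exists M, (0 <= M)%R /\ forall N i, (Cmod (qbinom Q N i - / L) <= M)%R.
Proof.
  destruct (cv_bounded _ _ HL) as [Bu [HBu HBub]].
  destruct (cv_bounded_below _ _ HL HL0 (qpoch_neq0 Q HQ)) as [Bl [HBl HBlb]].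
  assert (Hqb : forall N i, (Cmod (qbinom Q N i) <= Bu / (Bl * Bl))%R).
  { intros N i. destruct (Compare_dec.le_lt_dec i N).
    - rewrite qbinom_le by auto. apply Cmod_div_mul_le; auto.
    - rewrite qbinom_gt by auto. rewrite Cmod_0. apply Rdiv_le_0_compat; nra. }
  exists (Bu / (Bl * Bl) + Cmod (/ L))%R. split.
  - pose proof (Cmod_ge_0 (/ L)). pose proof (Hqb 0%nat 0%nat).
    pose proof (Cmod_ge_0 (qbinom Q 0 0)). lra.
  - intros N i. eapply Rle_trans. apply Cmod_triangle. rewrite Cmod_opp.
    pose proof (Hqb N i). lra.
Qed.

Lemma qbinom_center_add_cv k : cv (fun n => qbinom Q (2 * n) (n + k) - / L) 0.
Proof.
  replace (RtoC 0) with (/ L - / L) by ring. apply cv_minus; [|apply cv_const].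
  apply (cv_eventually_ext (fun n => qpoch Q (2 * n) / (qpoch Q (n + k) * qpoch Q (n - k)))).
  - exists k. intros n Hn. rewrite qbinom_le by lia. do 3 f_equal. lia.
  - replace (/ L) with (L / (L * L)) by (field; auto).
    apply cv_div.
    + apply (cv_subseq_ge (qpoch Q)); [intros; lia | auto].
    + apply cv_mult; [apply cv_shift | apply cv_shift_sub]; auto.
    + apply Cmult_neq_0; auto.
Qed.

Lemma qbinom_center_sub_cv k : cv (fun n => qbinom Q (2 * n) (n - k) - / L) 0.
Proof.
  apply (cv_eventually_ext (fun n => qbinom Q (2 * n) (n + k) - / L)).
  - exists k. intros n Hn. rewrite <- (qbinom_sym Q (2 * n) (n - k)) by lia.
    do 2 f_equal. lia.
  - apply qbinom_center_add_cv.
Qed.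

End CentralQBinomial.

Lemma triple_part_center a b n l : (Re a < 0)%R ->
  triple_part a b n = l * theta_part a b n +
    ((qbinom (E (2 * a)) (2 * n) n - l)
     + sum_1to (fun k => (qbinom (E (2 * a)) (2 * n) (n + k) - l) * theta_term a b k) n
     + sum_1to (fun k => (qbinom (E (2 * a)) (2 * n) (n - k) - l) * theta_term a (- b) k) n).
Proof.
  intros Ha. rewrite triple_part_qbinom, sum_lt_symmetric by auto.
  rewrite (sum_1to_ext _ (fun k => qbinom (E (2 * a)) (2 * n) (n + k) * theta_term a b k
                                 + qbinom (E (2 * a)) (2 * n) (n - k) * theta_term a (- b) k)).
  2: { intros k Hk. unfold theta_term_shift, theta_term. f_equal; f_equal; f_equal.
       - rewrite natC_add. ring.
       - rewrite natC_sub by lia. ring. }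
  rewrite (sum_1to_center _ _ _ _ l), theta_part_sum_1to.
  unfold theta_term_shift.
  replace ((natC n - natC n) * (natC n - natC n) * a + (natC n - natC n) * b) with (RtoC 0) by ring.
  rewrite cexp_0. ring.
Qed.

Lemma qpoch_cexp a n : qpoch (E (2 * a)) n = eprod_part ipi (2 * a) n.
Proof.
  unfold qpoch, eprod_part. apply pprod_ext. intros k _.
  rewrite cexp_add, cexp_ipi, cexp_natC_mul. ring.
Qed.

(** The error terms of [triple_part_center] have bounded coefficients tending to [0]
    against geometrically decaying theta terms, so Tannery's theorem kills them. *)
Lemma triple_part_cv a b : (Re a < 0)%R ->
  cv (triple_part a b) (/ eprod ipi (2 * a) * theta a b).
Proof.
  intros Ha. set (Q := E (2 * a)). set (lam := / eprod ipi (2 * a)).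
  pose proof (one_sub_cexp_pow_neq0 a Ha) as HQ.
  assert (HL : cv (qpoch Q) (eprod ipi (2 * a))).
  { eapply cv_ext. intros n. symmetry. apply qpoch_cexp. apply eprod_cv. Re_lt0. }
  assert (HL0 : eprod ipi (2 * a) <> 0) by (apply eprod_neq0; Re_lt0).
  destruct (qbinom_sub_inv_bounded Q _ HQ HL HL0) as [M [HM HMb]].
  destruct (theta_term_bound a b Ha) as [K1 [HK1 H1]].
  destruct (theta_term_bound a (- b) Ha) as [K2 [HK2 H2]].
  pose proof (exp_lt1_of_neg _ Ha) as Hr.
  eapply cv_ext. intros n. symmetry. apply (triple_part_center a b n lam Ha).
  replace (lam * theta a b) with (lam * theta a b + ((0 + 0) + 0)) by ring.
  apply cv_plus; [apply cv_scal, theta_cv; auto|].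
  apply cv_plus; [apply cv_plus|].
  - eapply cv_ext; [|apply (qbinom_center_add_cv Q _ HL HL0 0%nat)].
    intros n. simpl. rewrite Nat.add_0_r. reflexivity.
  - apply (tannery (fun n k => qbinom Q (2 * n) (n + k) - lam) (theta_term a b) M K1 _
             HM HK1 Hr);
      [intros; apply HMb | apply qbinom_center_add_cv | ]; auto.
  - apply (tannery (fun n k => qbinom Q (2 * n) (n - k) - lam) (theta_term a (- b)) M K2 _
             HM HK2 Hr);
      [intros; apply HMb | apply qbinom_center_sub_cv | ]; auto.
Qed.

Theorem jacobi_triple_product a b : (Re a < 0)%R -> theta a b = tprod a b.
Proof.
  intros Ha. set (L := eprod ipi (2 * a)).
  assert (Ha2 : (Re (2 * a) < 0)%R) by Re_lt0.
  assert (HL0 : L <> 0) by (apply eprod_neq0; Re_lt0).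
  assert (Hpart : forall n, eprod_part ipi (2 * a) n * eprod_part (b - a) (2 * a) n
                           * eprod_part (- b - a) (2 * a) n
                         = eprod_part ipi (2 * a) n * triple_part a b n).
  { intros n. unfold triple_part, eprod_part.
    rewrite <- Cmult_assoc, <- pprod_mult. f_equal. apply pprod_ext. intros k _.
    f_equal; f_equal; f_equal; ring. }
  apply (cv_unique (fun n => eprod_part ipi (2 * a) n * triple_part a b n)).
  - replace (theta a b) with (L * (/ L * theta a b)) by (field; auto).
    apply cv_mult; [apply eprod_cv | apply triple_part_cv]; auto.
  - eapply cv_ext; [intros n; apply Hpart|].
    unfold tprod. repeat apply cv_mult; apply eprod_cv; auto.
Qed.

Lemma Cmult_reg_r (x y z : C) : z <> 0 -> x * z = y * z -> x = y.
Proof. intros Hz H. replace x with (x * z / z) by (field; auto). rewrite H. field; auto. Qed.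

Lemma tprod_cexp_ext a b a' b' : E a = E a' -> E b = E b' -> tprod a b = tprod a' b'.
Proof.
  intros Ha Hb. unfold tprod.
  assert (H2 : E (2 * a) = E (2 * a')).
  { replace (2 * a) with (a + a) by ring. replace (2 * a') with (a' + a') by ring.
    rewrite !cexp_add, Ha. reflexivity. }
  assert (Hsub : forall c c', E c = E c' -> E (c - a) = E (c' - a')).
  { intros c c' Hc. unfold Cminus. rewrite !cexp_add, !cexp_opp, Ha, Hc. reflexivity. }
  assert (Hopp : E (- b) = E (- b')) by (rewrite !cexp_opp, Hb; reflexivity).
  rewrite (eprod_cexp_ext ipi (2 * a) ipi (2 * a')),
    (eprod_cexp_ext (b - a) (2 * a) (b' - a') (2 * a')),
    (eprod_cexp_ext (- b - a) (2 * a) (- b' - a') (2 * a')); auto.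
Qed.

Lemma tprod_opp a b : tprod a (- b) = tprod a b.
Proof. unfold tprod. replace (- - b) with b by ring. ring. Qed.

Lemma tprod_0_r a : tprod a 0 = eprod ipi (2 * a) * eprod (- a) (2 * a) * eprod (- a) (2 * a).
Proof.
  unfold tprod. replace (0 - a) with (- a) by ring. replace (- 0 - a) with (- a) by ring.
  reflexivity.
Qed.

Lemma tprod_diag a : (Re a < 0)%R ->
  tprod a a = 2 * eprod ipi (2 * a) * eprod 0 (2 * a) * eprod 0 (2 * a).
Proof.
  intros Ha. unfold tprod.
  rewrite (eprod_shift (- a - a) (2 * a)) by Re_lt0.
  replace (- a - a + 2 * a) with (RtoC 0) by ring. rewrite cexp_0.
  replace (a - a) with (RtoC 0) by ring. ring.
Qed.

Lemma tprod_0_r_neq0 a : (Re a < 0)%R -> tprod a 0 <> 0.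
Proof. intros Ha. rewrite tprod_0_r. repeat apply Cmult_neq_0; apply eprod_neq0; Re_lt0. Qed.

Lemma tprod_diag_neq0 a : (Re a < 0)%R -> tprod a a <> 0.
Proof.
  intros Ha. rewrite tprod_diag by auto.
  repeat apply Cmult_neq_0; try (apply eprod_neq0; Re_lt0).
  intros H; injection H; lra.
Qed.

Lemma tprod_dissect a b : (Re a < 0)%R ->
  tprod a b = tprod (4 * a) (2 * b) + E (a + b) * tprod (4 * a) (4 * a + 2 * b).
Proof. intros Ha. rewrite <- !jacobi_triple_product by Re_lt0. apply theta_dissect; auto. Qed.

Lemma tprod_mul_shift_ipi a b : (Re a < 0)%R ->
  tprod a b * tprod a (b + ipi) =
  eprod ipi (2 * a) * eprod ipi (2 * a)
  * eprod (2 * (b - a) + ipi) (2 * (2 * a)) * eprod (2 * (- b - a) + ipi) (2 * (2 * a)).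
Proof.
  intros Ha. unfold tprod.
  rewrite (eprod_cexp_ext (- (b + ipi) - a) (2 * a) (- b - a + ipi) (2 * a)) by cexp_period.
  replace (b + ipi - a) with (b - a + ipi) by ring.
  rewrite <- !eprod_mul_shift_ipi by Re_lt0. ring.
Qed.

Lemma tprod_0_mul_shift_ipi a : (Re a < 0)%R ->
  tprod a 0 * tprod (a + ipi) 0 = tprod (2 * a + ipi) 0 * tprod (2 * a + ipi) 0.
Proof.
  intros Ha. assert (Ha2 : (Re (2 * a) < 0)%R) by Re_lt0.
  rewrite !tprod_0_r.
  rewrite (eprod_cexp_ext ipi (2 * (a + ipi)) ipi (2 * a)) by cexp_period.
  rewrite (eprod_cexp_ext (- (a + ipi)) (2 * (a + ipi)) (- a + ipi) (2 * a)) by cexp_period.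
  rewrite (eprod_cexp_ext ipi (2 * (2 * a + ipi)) ipi (2 * (2 * a))) by cexp_period.
  rewrite (eprod_cexp_ext (- (2 * a + ipi)) (2 * (2 * a + ipi)) (2 * - a + ipi) (2 * (2 * a)))
    by cexp_period.
  rewrite (eprod_split_parity ipi (2 * a) Ha2).
  rewrite (eprod_cexp_ext (ipi - 2 * a) (2 * (2 * a)) (2 * - a + ipi) (2 * (2 * a))) by cexp_period.
  rewrite <- (eprod_mul_shift_ipi (- a) (2 * a) Ha2). ring.
Qed.

(** * The modular equation for u *)

Lemma tprod_0_sq_duplication a : (Re a < 0)%R ->
  tprod (2 * a) 0 * tprod (2 * a) 0 =
  tprod (4 * a) 0 * tprod (4 * a) 0 + E (2 * a) * (tprod (4 * a) (4 * a) * tprod (4 * a) (4 * a)).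
Proof.
  intros Ha. set (b := a + ipi2).
  assert (Hb : (Re b < 0)%R) by (unfold b; Re_lt0).
  assert (Hb' : (Re (b + ipi) < 0)%R) by (unfold b; Re_lt0).
  rewrite (tprod_cexp_ext (2 * a) 0 (2 * b + ipi) 0) by (unfold b; cexp_period).
  rewrite <- tprod_0_mul_shift_ipi, (tprod_dissect b 0 Hb), (tprod_dissect (b + ipi) 0 Hb')
    by auto.
  rewrite (tprod_cexp_ext (4 * b) (2 * 0) (4 * a) 0) by (unfold b; cexp_period).
  rewrite (tprod_cexp_ext (4 * b) (4 * b + 2 * 0) (4 * a) (4 * a)) by (unfold b; cexp_period).
  rewrite (tprod_cexp_ext (4 * (b + ipi)) (2 * 0) (4 * a) 0) by (unfold b; cexp_period).
  rewrite (tprod_cexp_ext (4 * (b + ipi)) (4 * (b + ipi) + 2 * 0) (4 * a) (4 * a))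
    by (unfold b; cexp_period).
  replace (b + ipi + 0) with (b + ipi) by ring. replace (b + 0) with b by ring.
  rewrite cexp_add_ipi.
  assert (Eb : E b * E b = - E (2 * a)).
  { rewrite <- cexp_add, <- cexp_add_ipi. unfold b. cexp_period. }
  transitivity (tprod (4 * a) 0 * tprod (4 * a) 0
                - E b * E b * (tprod (4 * a) (4 * a) * tprod (4 * a) (4 * a))); [ring|].
  rewrite Eb. ring.
Qed.

Lemma tprod_diag_sq_duplication a : (Re a < 0)%R ->
  tprod a a * tprod a a = 2 * tprod (2 * a) 0 * tprod (2 * a) (2 * a).
Proof.
  intros Ha. assert (Ha2 : (Re (2 * a) < 0)%R) by Re_lt0.
  rewrite (tprod_diag a Ha), (tprod_diag (2 * a) Ha2), tprod_0_r.
  pose proof (eprod_mul_shift_ipi 0 (2 * a) Ha2) as P.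
  rewrite (eprod_cexp_ext (0 + ipi) (2 * a) ipi (2 * a)) in P by cexp_period.
  rewrite (eprod_cexp_ext (2 * 0 + ipi) (2 * (2 * a)) ipi (2 * (2 * a))) in P by cexp_period.
  rewrite <- P, (eprod_split_parity 0 (2 * a) Ha2).
  rewrite (eprod_cexp_ext (0 - 2 * a) (2 * (2 * a)) (- (2 * a)) (2 * (2 * a))) by cexp_period.
  ring.
Qed.

(** [u_prod a = prod_(n>=1) (1 + e^(2na)) / (1 + e^((2n-1)a))], so that
    [u tau = sqrt 2 q^(1/8) u_prod (2 U)] with [q = e^(2U)]. *)
Definition u_prod (a : C) : C := eprod 0 (2 * a) / eprod (- a) (2 * a).

Lemma tprod_diag_u_prod a : (Re a < 0)%R ->
  tprod a a = 2 * (u_prod a * u_prod a) * tprod a 0.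
Proof.
  intros Ha. rewrite tprod_diag, tprod_0_r by auto. unfold u_prod.
  assert (eprod (- a) (2 * a) <> 0) by (apply eprod_neq0; Re_lt0).
  field. auto.
Qed.

Lemma u_prod_modular_equation a : (Re a < 0)%R ->
  let x := u_prod (2 * a) * u_prod (2 * a) in
  let y := u_prod (4 * a) * u_prod (4 * a) in
  x * x * (1 + 4 * E (2 * a) * y * y) = y.
Proof.
  intros Ha x y.
  assert (Ha2 : (Re (2 * a) < 0)%R) by Re_lt0.
  assert (Ha4 : (Re (4 * a) < 0)%R) by Re_lt0.
  pose proof (tprod_0_sq_duplication a Ha) as D3.
  pose proof (tprod_diag_sq_duplication (2 * a) Ha2) as D2.
  replace (2 * (2 * a)) with (4 * a) in D2 by ring.
  rewrite (tprod_diag_u_prod (2 * a)), (tprod_diag_u_prod (4 * a)) in D2 by auto.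
  rewrite (tprod_diag_u_prod (4 * a)) in D3 by auto.
  fold x y in D2, D3.
  set (t2 := tprod (2 * a) 0) in *. set (t4 := tprod (4 * a) 0) in *.
  apply (Cmult_reg_r _ _ (t4 * t4)); [apply Cmult_neq_0; apply tprod_0_r_neq0; auto|].
  transitivity (x * x * (t4 * t4 + E (2 * a) * (2 * y * t4 * (2 * y * t4)))); [ring|].
  rewrite <- D3.
  transitivity (2 * x * t2 * (2 * x * t2) / 4); [field|].
  rewrite D2. field.
Qed.

(** * The modular equation for v *)

(** With [q = e^(2T)], [v_prod T] is
    [prod_(n>=1) (1 - q^(8n-7)) (1 - q^(8n-1)) / ((1 - q^(8n-5)) (1 - q^(8n-3)))], and
    [tprod_pm1 T], [tprod_pm3 T] are [prod_(n>=1) (1 - q^(8n))] times the factors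
    [1 - q^m] with [m = ±1], resp. [m = ±3] mod 8. *)
Definition tprod_pm1 T := tprod (8 * T) (ipi - 6 * T).
Definition tprod_pm3 T := tprod (8 * T) (ipi - 2 * T).
Definition v_prod T :=
  eprod (ipi - 14 * T) (16 * T) * eprod (ipi - 2 * T) (16 * T)
  / (eprod (ipi - 10 * T) (16 * T) * eprod (ipi - 6 * T) (16 * T)).

Lemma tprod_pm1_eprod T :
  tprod_pm1 T = eprod ipi (16 * T) * eprod (ipi - 14 * T) (16 * T) * eprod (ipi - 2 * T) (16 * T).
Proof.
  unfold tprod_pm1, tprod.
  rewrite (eprod_cexp_ext ipi (2 * (8 * T)) ipi (16 * T)) by cexp_period.
  rewrite (eprod_cexp_ext (ipi - 6 * T - 8 * T) (2 * (8 * T)) (ipi - 14 * T) (16 * T))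
    by cexp_period.
  rewrite (eprod_cexp_ext (- (ipi - 6 * T) - 8 * T) (2 * (8 * T)) (ipi - 2 * T) (16 * T))
    by cexp_period.
  reflexivity.
Qed.

Lemma tprod_pm3_eprod T :
  tprod_pm3 T = eprod ipi (16 * T) * eprod (ipi - 10 * T) (16 * T) * eprod (ipi - 6 * T) (16 * T).
Proof.
  unfold tprod_pm3, tprod.
  rewrite (eprod_cexp_ext ipi (2 * (8 * T)) ipi (16 * T)) by cexp_period.
  rewrite (eprod_cexp_ext (ipi - 2 * T - 8 * T) (2 * (8 * T)) (ipi - 10 * T) (16 * T))
    by cexp_period.
  rewrite (eprod_cexp_ext (- (ipi - 2 * T) - 8 * T) (2 * (8 * T)) (ipi - 6 * T) (16 * T))
    by cexp_period.
  reflexivity.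
Qed.

Lemma tprod_pm1_neq0 T : (Re T < 0)%R -> tprod_pm1 T <> 0.
Proof. intros HT. rewrite tprod_pm1_eprod. repeat apply Cmult_neq_0; apply eprod_neq0; Re_lt0. Qed.

Lemma tprod_pm3_neq0 T : (Re T < 0)%R -> tprod_pm3 T <> 0.
Proof. intros HT. rewrite tprod_pm3_eprod. repeat apply Cmult_neq_0; apply eprod_neq0; Re_lt0. Qed.

Lemma v_prod_tprod T : (Re T < 0)%R -> v_prod T = tprod_pm1 T / tprod_pm3 T.
Proof.
  intros HT. rewrite tprod_pm1_eprod, tprod_pm3_eprod. unfold v_prod.
  assert (eprod ipi (16 * T) <> 0) by (apply eprod_neq0; Re_lt0).
  assert (eprod (ipi - 10 * T) (16 * T) <> 0) by (apply eprod_neq0; Re_lt0).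
  assert (eprod (ipi - 6 * T) (16 * T) <> 0) by (apply eprod_neq0; Re_lt0).
  field. auto.
Qed.

Lemma v_prod_neq0 T : (Re T < 0)%R -> v_prod T <> 0.
Proof.
  intros HT Hv. pose proof (tprod_pm3_neq0 T HT).
  apply (tprod_pm1_neq0 T HT). rewrite v_prod_tprod in Hv by auto.
  replace (tprod_pm1 T) with (tprod_pm1 T / tprod_pm3 T * tprod_pm3 T) by (field; auto).
  rewrite Hv. ring.
Qed.

Lemma tprod_dissect_pm s b T : (Re s < 0)%R -> E (4 * s) = E (8 * T) ->
  E (2 * b) = E (2 * T + ipi) ->
  tprod s b = tprod_pm3 T + E (s - b) * tprod_pm1 T.
Proof.
  intros Hs H4 H2. unfold tprod_pm1, tprod_pm3.
  rewrite <- (tprod_opp s b), tprod_dissect by auto.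
  assert (H2' : E (2 * - b) = E (ipi - 2 * T)).
  { replace (2 * - b) with (- (2 * b)) by ring. rewrite cexp_opp, H2, <- cexp_opp. cexp_period. }
  rewrite (tprod_cexp_ext (4 * s) (2 * - b) (8 * T) (ipi - 2 * T)) by auto.
  rewrite (tprod_cexp_ext (4 * s) (4 * s + 2 * - b) (8 * T) (- (ipi - 6 * T))), tprod_opp.
  - replace (s + - b) with (s - b) by ring. reflexivity.
  - exact H4.
  - rewrite cexp_add, H4, H2', <- cexp_add. cexp_period.
Qed.

Lemma tprod_pm1_mul_pm3 T : (Re T < 0)%R ->
  tprod_pm1 T * tprod_pm3 T = eprod ipi (16 * T) * eprod ipi (16 * T) * eprod (ipi - 2 * T) (4 * T).
Proof.
  intros HT. rewrite tprod_pm1_eprod, tprod_pm3_eprod.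
  rewrite (eprod_split_parity (ipi - 2 * T) (4 * T)) by Re_lt0.
  rewrite (eprod_cexp_ext (ipi - 2 * T - 4 * T) (2 * (4 * T)) (ipi - 6 * T) (8 * T)) by cexp_period.
  rewrite (eprod_cexp_ext (ipi - 2 * T) (2 * (4 * T)) (ipi - 2 * T) (8 * T)) by cexp_period.
  rewrite (eprod_split_parity (ipi - 6 * T) (8 * T)), (eprod_split_parity (ipi - 2 * T) (8 * T))
    by Re_lt0.
  rewrite (eprod_cexp_ext (ipi - 6 * T - 8 * T) (2 * (8 * T)) (ipi - 14 * T) (16 * T))
    by cexp_period.
  rewrite (eprod_cexp_ext (ipi - 6 * T) (2 * (8 * T)) (ipi - 6 * T) (16 * T)) by cexp_period.
  rewrite (eprod_cexp_ext (ipi - 2 * T - 8 * T) (2 * (8 * T)) (ipi - 10 * T) (16 * T))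
    by cexp_period.
  rewrite (eprod_cexp_ext (ipi - 2 * T) (2 * (8 * T)) (ipi - 2 * T) (16 * T)) by cexp_period.
  ring.
Qed.

Lemma eprod_ipi_double d : (Re d < 0)%R -> eprod ipi (2 * d) = eprod 0 d * eprod ipi d.
Proof.
  intros Hd. rewrite (eprod_cexp_ext ipi (2 * d) (2 * 0 + ipi) (2 * d)) by cexp_period.
  rewrite <- (eprod_mul_shift_ipi 0 d Hd). replace (0 + ipi) with ipi by ring. reflexivity.
Qed.

Lemma tprod_shifted_pair T w : (Re T < 0)%R -> (Re w = 0)%R -> E (4 * w) = 1 ->
  tprod (2 * T + w) (T + ipi2) * tprod (2 * T + w) (T + ipi2 + ipi) =
  eprod ipi (4 * T + 2 * w) * eprod ipi (4 * T + 2 * w) * eprod (- 2 * T - 2 * w) (4 * T).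
Proof.
  intros HT Hw H4w. rewrite tprod_mul_shift_ipi by Re_lt0.
  assert (Hstep : forall c, E (c + 4 * w) = E c) by (intros; rewrite cexp_add, H4w; ring).
  rewrite (eprod_cexp_ext ipi (2 * (2 * T + w)) ipi (4 * T + 2 * w)) by cexp_period.
  rewrite (eprod_cexp_ext (2 * (T + ipi2 - (2 * T + w)) + ipi) (2 * (2 * (2 * T + w)))
                          (- 2 * T - 2 * w) (8 * T)).
  2: cexp_period.
  2: rewrite <- (Hstep (8 * T)); f_equal; ring.
  rewrite (eprod_cexp_ext (2 * (- (T + ipi2) - (2 * T + w)) + ipi) (2 * (2 * (2 * T + w)))
                          (- 2 * T - 2 * w - 4 * T) (8 * T)).
  2: cexp_period.
  2: rewrite <- (Hstep (8 * T)); f_equal; ring.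
  rewrite (eprod_split_parity (- 2 * T - 2 * w) (4 * T)) by Re_lt0.
  rewrite (eprod_cexp_ext (- 2 * T - 2 * w) (2 * (4 * T)) (- 2 * T - 2 * w) (8 * T)) by cexp_period.
  rewrite (eprod_cexp_ext (- 2 * T - 2 * w - 4 * T) (2 * (4 * T))
                          (- 2 * T - 2 * w - 4 * T) (8 * T)) by cexp_period.
  ring.
Qed.

Lemma tprod_product_I T : (Re T < 0)%R ->
  tprod (2 * T + ipi) (T + ipi2) * tprod (2 * T + ipi) (T + ipi2 + ipi) * tprod (4 * T) (4 * T) =
  2 * (tprod_pm1 T * tprod_pm3 T) * tprod (2 * T) 0.
Proof.
  intros HT.
  rewrite tprod_shifted_pair by (reflexivity || (rewrite <- cexp_0; cexp_period) || auto).
  rewrite tprod_pm1_mul_pm3, tprod_diag, tprod_0_r by Re_lt0.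
  rewrite (eprod_cexp_ext ipi (16 * T) ipi (2 * (8 * T))), (eprod_ipi_double (8 * T))
    by (cexp_period || Re_lt0).
  rewrite (eprod_cexp_ext ipi (4 * T + 2 * ipi) ipi (4 * T)) by cexp_period.
  rewrite (eprod_cexp_ext (- 2 * T - 2 * ipi) (4 * T) (- (2 * T)) (4 * T)) by cexp_period.
  rewrite (eprod_cexp_ext ipi (2 * (4 * T)) ipi (8 * T)) by cexp_period.
  rewrite (eprod_cexp_ext 0 (2 * (4 * T)) 0 (8 * T)) by cexp_period.
  rewrite (eprod_cexp_ext ipi (2 * (2 * T)) ipi (4 * T)) by cexp_period.
  rewrite (eprod_cexp_ext (- (2 * T)) (2 * (2 * T)) (- (2 * T)) (4 * T)) by cexp_period.
  rewrite (eprod_split_parity ipi (4 * T)) by Re_lt0.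
  rewrite (eprod_cexp_ext ipi (2 * (4 * T)) ipi (8 * T)) by cexp_period.
  rewrite (eprod_cexp_ext (ipi - 4 * T) (2 * (4 * T)) (2 * - (2 * T) + ipi) (2 * (4 * T)))
    by cexp_period.
  rewrite <- (eprod_mul_shift_ipi (- (2 * T)) (4 * T)) by Re_lt0.
  rewrite (eprod_cexp_ext (- (2 * T) + ipi) (4 * T) (ipi - 2 * T) (4 * T)) by cexp_period.
  ring.
Qed.

Lemma tprod_product_II T : (Re T < 0)%R ->
  tprod (2 * T + ipi2) (T + ipi2) * tprod (2 * T + ipi2) (T + ipi2 + ipi) * tprod (4 * T) (4 * T) =
  2 * (tprod_pm1 T * tprod_pm3 T) * tprod (4 * T) 0.
Proof.
  intros HT.
  rewrite tprod_shifted_pair by (reflexivity || (rewrite <- cexp_0; cexp_period) || auto).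
  rewrite tprod_pm1_mul_pm3, tprod_diag, tprod_0_r by Re_lt0.
  rewrite (eprod_cexp_ext ipi (16 * T) ipi (2 * (8 * T))), (eprod_ipi_double (8 * T))
    by (cexp_period || Re_lt0).
  rewrite (eprod_cexp_ext (- 2 * T - 2 * ipi2) (4 * T) (ipi - 2 * T) (4 * T)) by cexp_period.
  rewrite (eprod_cexp_ext ipi (2 * (4 * T)) ipi (8 * T)) by cexp_period.
  rewrite (eprod_cexp_ext 0 (2 * (4 * T)) 0 (8 * T)) by cexp_period.
  rewrite (eprod_cexp_ext (- (4 * T)) (2 * (4 * T)) (- (4 * T)) (8 * T)) by cexp_period.
  rewrite (eprod_split_parity ipi (4 * T + 2 * ipi2)) by Re_lt0.
  rewrite (eprod_cexp_ext (ipi - (4 * T + 2 * ipi2)) (2 * (4 * T + 2 * ipi2)) (- (4 * T)) (8 * T))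
    by cexp_period.
  rewrite (eprod_cexp_ext ipi (2 * (4 * T + 2 * ipi2)) ipi (8 * T)) by cexp_period.
  ring.
Qed.

Lemma v_prod_identity_I T : (Re T < 0)%R ->
  let x := E T * v_prod T in
  (1 + x * x) * E T * tprod (4 * T) (4 * T) = 2 * x * tprod (2 * T) 0.
Proof.
  intros HT x. unfold x. rewrite v_prod_tprod by auto.
  pose proof (tprod_pm3_neq0 T HT).
  pose proof (tprod_product_I T HT) as P.
  rewrite (tprod_dissect_pm _ _ T), (tprod_dissect_pm (2 * T + ipi) (T + ipi2 + ipi) T) in P
    by (Re_lt0 || cexp_period).
  assert (Ep : E (2 * T + ipi - (T + ipi2)) = E (T + ipi2)) by cexp_period.
  assert (Em : E (2 * T + ipi - (T + ipi2 + ipi)) = - E (T + ipi2))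
    by (rewrite <- cexp_add_ipi; cexp_period).
  assert (Esq : E (T + ipi2) * E (T + ipi2) = - (E T * E T)).
  { rewrite <- !cexp_add, <- cexp_add_ipi. cexp_period. }
  rewrite Ep, Em in P.
  set (F1 := tprod_pm1 T) in *. set (F3 := tprod_pm3 T) in *.
  transitivity (E T / (F3 * F3) * ((F3 * F3 - E (T + ipi2) * E (T + ipi2) * (F1 * F1))
                                    * tprod (4 * T) (4 * T))).
  { rewrite Esq. field. auto. }
  transitivity (E T / (F3 * F3) * ((F3 + E (T + ipi2) * F1) * (F3 + - E (T + ipi2) * F1)
                                    * tprod (4 * T) (4 * T))); [ring|].
  rewrite P. field. auto.
Qed.

Lemma v_prod_identity_II T : (Re T < 0)%R ->
  let x := E T * v_prod T in
  (1 - x * x) * E T * tprod (4 * T) (4 * T) = 2 * x * tprod (4 * T) 0.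
Proof.
  intros HT x. unfold x. rewrite v_prod_tprod by auto.
  pose proof (tprod_pm3_neq0 T HT).
  pose proof (tprod_product_II T HT) as P.
  rewrite (tprod_dissect_pm _ _ T), (tprod_dissect_pm (2 * T + ipi2) (T + ipi2 + ipi) T) in P
    by (Re_lt0 || cexp_period).
  replace (2 * T + ipi2 - (T + ipi2)) with T in P by ring.
  assert (Em : E (2 * T + ipi2 - (T + ipi2 + ipi)) = - E T)
    by (rewrite <- cexp_add_ipi; cexp_period).
  rewrite Em in P.
  set (F1 := tprod_pm1 T) in *. set (F3 := tprod_pm3 T) in *.
  transitivity (E T / (F3 * F3) * ((F3 + E T * F1) * (F3 + - E T * F1) * tprod (4 * T) (4 * T))).
  { field. auto. }
  rewrite P. field. auto.
Qed.

Lemma v_prod_modular_equation T : (Re T < 0)%R ->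
  let x := E T * v_prod T in
  let y := E (2 * T) * v_prod (2 * T) in
  x * x * y + x * x + y * y = y.
Proof.
  intros HT x y.
  assert (HT2 : (Re (2 * T) < 0)%R) by Re_lt0.
  pose proof (v_prod_identity_I T HT) as Ix. pose proof (v_prod_identity_II T HT) as IIx.
  pose proof (v_prod_identity_I (2 * T) HT2) as Iy.
  pose proof (v_prod_identity_II (2 * T) HT2) as IIy.
  pose proof (tprod_dissect (2 * T) 0 HT2) as D.
  cbv zeta in Ix, IIx, Iy, IIy. fold x in Ix, IIx. fold y in Iy, IIy.
  replace (4 * (2 * T)) with (8 * T) in Iy, IIy, D by ring.
  replace (2 * (2 * T)) with (4 * T) in Iy by ring.
  rewrite (tprod_cexp_ext (8 * T) (2 * 0) (8 * T) 0),
    (tprod_cexp_ext (8 * T) (8 * T + 2 * 0) (8 * T) (8 * T)) in D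
    by cexp_period.
  replace (2 * T + 0) with (2 * T) in D by ring.
  assert (Hx : x <> 0) by (apply Cmult_neq_0; [apply cexp_neq0 | apply v_prod_neq0; auto]).
  assert (H2x : 2 * x <> 0) by (apply Cmult_neq_0; auto; intros H; injection H; lra).
  set (W := E (2 * T) * tprod (8 * T) (8 * T)).
  assert (HW : W <> 0) by (apply Cmult_neq_0; [apply cexp_neq0 | apply tprod_diag_neq0; Re_lt0]).
  assert (Hratio : (1 - x * x) * tprod (2 * T) 0 = (1 + x * x) * tprod (4 * T) 0).
  { apply (Cmult_reg_r _ _ (2 * x)); auto.
    transitivity ((1 - x * x) * ((1 + x * x) * E T * tprod (4 * T) (4 * T))); [rewrite Ix; ring|].
    transitivity ((1 + x * x) * ((1 - x * x) * E T * tprod (4 * T) (4 * T))); [ring|].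
    rewrite IIx. ring. }
  assert (Hy : (1 - x * x) * (1 + 2 * y - y * y) * W = (1 + x * x) * (1 + y * y) * W).
  { transitivity ((1 - x * x) * (2 * y * W + 2 * y * tprod (8 * T) 0)).
    { rewrite <- IIy. unfold W. ring. }
    transitivity (2 * y * ((1 - x * x) * (tprod (8 * T) 0 + E (2 * T) * tprod (8 * T) (8 * T)))).
    { unfold W. ring. }
    rewrite <- D, Hratio.
    transitivity ((1 + x * x) * (2 * y * tprod (4 * T) 0)); [ring|].
    rewrite <- Iy. unfold W. ring. }
  apply Cmult_reg_r in Hy; auto.
  apply (Cmult_reg_r _ _ 2); [intros H; injection H; lra|].
  transitivity (2 * y - ((1 - x * x) * (1 + 2 * y - y * y) - (1 + x * x) * (1 + y * y))); [ring|].
  rewrite Hy. ring.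
Qed.

Lemma czpow_one_add_bound w e r n : (0 <= r < 1)%R -> (1 <= n)%nat -> (Cmod w <= r ^ n)%R ->
  (e = 0 \/ e = 1 \/ e = -1)%Z -> (Cmod (czpow (1 + w) e - 1) <= / (1 - r) * r ^ n)%R.
Proof.
  intros Hr Hn Hw He.
  assert (Hrn : (0 <= r ^ n)%R) by (apply pow_le; lra).
  assert (HK : (1 <= / (1 - r))%R) by (rewrite <- Rinv_1; apply Rinv_le_contravar; lra).
  destruct He as [-> | [-> | ->]]; simpl.
  - replace (RtoC 1 - 1) with (RtoC 0) by ring. rewrite Cmod_0. nra.
  - replace ((1 + w) * 1 - 1) with w by ring. nra.
  - pose proof (pow_le_base r n ltac:(lra) Hn).
    replace ((1 + w) * 1) with (1 + w) by ring.
    eapply Rle_trans; [apply (Cmod_inv_one_add_sub1 w r); lra|].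
    unfold Rdiv. rewrite Rmult_comm. apply Rmult_le_compat_l; [lra | auto].
Qed.

Lemma prod_conv_of_subseq f k P : (0 < k)%nat -> (exists L, cv (pprod f) L) ->
  cv (fun N => pprod f (k * N)) P -> prod_conv f P.
Proof.
  intros Hk [L HL] HP. apply cv_filterlim.
  replace P with L; auto.
  apply (cv_unique (fun N => pprod f (k * N))); auto.
  apply (cv_subseq_ge (pprod f)); auto. intros; nia.
Qed.

Lemma pprod_factor_cv_ex A (f : nat -> C) (e : nat -> Z) (s : C) :
  (Re A < 0)%R -> Cmod s = 1%R -> (forall n, e n = 0 \/ e n = 1 \/ e n = -1)%Z ->
  (forall n, f n = czpow (1 + s * E (natC n * A)) (e n)) -> exists L, cv (pprod f) L.
Proof.
  intros HA Hs He Hf. pose proof (exp_lt1_of_neg _ HA) as Hr.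
  apply (pprod_cv_of_geometric f (/ (1 - exp (Re A))) (exp (Re A))); auto.
  - left. apply Rinv_0_lt_compat. lra.
  - intros n Hn. rewrite Hf. apply czpow_one_add_bound; auto.
    rewrite Cmod_mult, Hs, Rmult_1_l, Cmod_cexp_natC_mul. lra.
Qed.

Section UProduct.
Variables (tau : C) (A : C).
Hypothesis HA : (Re A < 0)%R.
Hypothesis Hq : forall n, qpow (INR n) tau = E (natC n * A).

Lemma pprod_u_factor_even N :
  pprod (u_factor tau) (2 * N) = eprod_part 0 (2 * A) N / eprod_part (- A) (2 * A) N.
Proof.
  induction N.
  - unfold eprod_part; simpl. field; intros Hz; injection Hz; lra.
  - replace (2 * S N)%nat with (S (S (2 * N))) by lia.
    rewrite !pprod_S, IHN. unfold eprod_part. rewrite !pprod_S.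
    unfold u_factor, czpow. rewrite Nat.even_succ_succ, Nat.even_even.
    rewrite <- (Nat.add_1_r (2 * N)), Nat.even_odd, !Hq.
    change (Pos.to_nat 1) with 1%nat. rewrite !Cpow_1_r.
    replace (S (2 * N + 1)) with (S (S (2 * N))) by lia.
    replace (0 + natC (S N) * (2 * A)) with (natC (S (S (2 * N))) * A) by (natC_simpl; ring).
    replace (- A + natC (S N) * (2 * A)) with (natC (2 * N + 1) * A) by (natC_simpl; ring).
    assert (Hne : pprod (fun n => 1 + E (- A + natC n * (2 * A))) N <> 0).
    { apply pprod_neq0. intros n Hn.
      replace (- A + natC n * (2 * A)) with (natC (2 * n - 1) * A)
        by (rewrite natC_sub by lia; natC_simpl; ring).
      rewrite <- (Cmult_1_l (E _)). apply one_add_cexp_neq0; [auto | apply Cmod_1 | lia]. }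
    pose proof (one_add_cexp_neq0 A 1 (2 * N + 1) HA Cmod_1 ltac:(lia)) as Hn.
    rewrite Cmult_1_l in Hn. field. auto.
Qed.

Lemma u_prod_conv : prod_conv (u_factor tau) (u_prod A).
Proof.
  apply (prod_conv_of_subseq _ 2); [lia| |].
  - apply (pprod_factor_cv_ex A _ (fun n => if Nat.even n then 1%Z else (-1)%Z) 1 HA Cmod_1).
    + intros n. destruct (Nat.even n); auto.
    + intros n. unfold u_factor. rewrite Hq, Cmult_1_l. reflexivity.
  - eapply cv_ext. intros N. symmetry. apply pprod_u_factor_even.
    assert (eprod (- A) (2 * A) <> 0) by (apply eprod_neq0; Re_lt0).
    unfold u_prod. apply cv_div; auto; apply eprod_cv; Re_lt0.
Qed.

End UProduct.

Lemma kron8_add_mul_8 N r : kron8 (8 * N + r) = kron8 r.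
Proof.
  unfold kron8. replace (8 * N + r)%nat with (r + N * 8)%nat by lia.
  rewrite Nat.Div0.mod_add. reflexivity.
Qed.

Lemma kron8_cases n : (kron8 n = 0 \/ kron8 n = 1 \/ kron8 n = -1)%Z.
Proof. unfold kron8. destruct (n mod 8) as [|[|[|[|[|[|[|[|m]]]]]]]]; auto. Qed.

Lemma cexp_v_residue T (j n : nat) : (j <= 8 * n)%nat ->
  E (ipi - 2 * natC j * T + natC n * (16 * T)) = - E (natC (8 * n - j) * (2 * T)).
Proof. intros H. rewrite <- cexp_add_ipi. f_equal. rewrite natC_sub by auto. natC_simpl. ring. Qed.

Section VProduct.
Variables (tau : C) (T : C).
Hypothesis HT : (Re T < 0)%R.
Hypothesis Hq : forall n, qpow (INR n) tau = E (natC n * (2 * T)).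

Lemma one_sub_cexp_neq0 n : (1 <= n)%nat -> 1 - E (natC n * (2 * T)) <> 0.
Proof.
  intros Hn. replace (1 - E (natC n * (2 * T))) with (1 + (- (1)) * E (natC n * (2 * T))) by ring.
  apply one_add_cexp_neq0; [Re_lt0 | rewrite Cmod_opp; apply Cmod_1 | auto].
Qed.

Lemma eprod_part_v_residue_neq0 j N : (1 <= j <= 7)%nat ->
  eprod_part (ipi - 2 * natC j * T) (16 * T) N <> 0.
Proof.
  intros Hj. apply pprod_neq0. intros n Hn. rewrite cexp_v_residue by lia.
  replace (1 + - E (natC (8 * n - j) * (2 * T))) with (1 - E (natC (8 * n - j) * (2 * T))) by ring.
  apply one_sub_cexp_neq0. lia.
Qed.

Lemma pprod_v_factor_8 N :
  pprod (v_factor tau) (8 * N) =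
  eprod_part (ipi - 2 * natC 7 * T) (16 * T) N * eprod_part (ipi - 2 * natC 1 * T) (16 * T) N
  / (eprod_part (ipi - 2 * natC 5 * T) (16 * T) N * eprod_part (ipi - 2 * natC 3 * T) (16 * T) N).
Proof.
  induction N.
  - unfold eprod_part; simpl. field; intros Hz; injection Hz; lra.
  - pose proof (eprod_part_v_residue_neq0 5 N ltac:(lia)).
    pose proof (eprod_part_v_residue_neq0 3 N ltac:(lia)).
    pose proof (one_sub_cexp_neq0 (8 * N + 3) ltac:(lia)).
    pose proof (one_sub_cexp_neq0 (8 * N + 5) ltac:(lia)).
    replace (8 * S N)%nat with (8 * N + 8)%nat by lia.
    rewrite pprod_add, IHN, !pprod_S, pprod_0. cbv beta. unfold v_factor.
    rewrite !kron8_add_mul_8.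
    repeat match goal with
           | |- context [kron8 ?r] =>
               let k := eval vm_compute in (kron8 r) in change (kron8 r) with k
           end.
    unfold czpow. change (Pos.to_nat 1) with 1%nat.
    rewrite !Cpow_1_r, !Hq.
    unfold eprod_part. rewrite !pprod_S, !cexp_v_residue by lia.
    replace (8 * S N - 7)%nat with (8 * N + 1)%nat by lia.
    replace (8 * S N - 1)%nat with (8 * N + 7)%nat by lia.
    replace (8 * S N - 5)%nat with (8 * N + 3)%nat by lia.
    replace (8 * S N - 3)%nat with (8 * N + 5)%nat by lia.
    unfold eprod_part in *. field. repeat split; auto.
Qed.

Lemma v_prod_conv : prod_conv (v_factor tau) (v_prod T).
Proof.
  apply (prod_conv_of_subseq _ 8); [lia| |].
  - apply (pprod_factor_cv_ex (2 * T) _ kron8 (- (1)) ltac:(Re_lt0));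
      [rewrite Cmod_opp; apply Cmod_1 | apply kron8_cases |].
    intros n. unfold v_factor. rewrite Hq. f_equal. ring.
  - eapply cv_ext. intros N. symmetry. apply pprod_v_factor_8.
    replace (natC 7) with (RtoC 7) by (unfold natC; simpl; f_equal; ring).
    replace (natC 5) with (RtoC 5) by (unfold natC; simpl; f_equal; ring).
    replace (natC 3) with (RtoC 3) by (unfold natC; simpl; f_equal; ring).
    replace (natC 1) with (RtoC 1) by (unfold natC; simpl; f_equal; ring).
    unfold v_prod.
    replace (ipi - 2 * 7 * T) with (ipi - 14 * T) by ring.
    replace (ipi - 2 * 5 * T) with (ipi - 10 * T) by ring.
    replace (ipi - 2 * 3 * T) with (ipi - 6 * T) by ring.
    replace (ipi - 2 * 1 * T) with (ipi - 2 * T) by ring.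
    apply cv_div; [apply cv_mult; apply eprod_cv; Re_lt0 .. |].
    apply Cmult_neq_0; apply eprod_neq0; Re_lt0.
Qed.

End VProduct.

Lemma qpow_cexp r t : qpow r t = E (RtoC (2 * r) * (RtoC PI * Ci * t)).
Proof. unfold qpow. f_equal. rewrite !RtoC_mult. ring. Qed.

Lemma Re_pi_i_neg t : (0 < Im t)%R -> (Re (RtoC PI * Ci * t) < 0)%R.
Proof.
  intros Ht. destruct t as [a b]. unfold Re, Im, Cmult, Ci, RtoC in *; simpl in *.
  pose proof PI_RGT_0. nra.
Qed.

Lemma qpow_pow r t n : qpow r t ^ n = qpow (INR n * r) t.
Proof. unfold qpow. rewrite <- cexp_natC_mul. f_equal. unfold natC. rewrite !RtoC_mult. ring. Qed.

Lemma qpow_scal r s t : qpow r (RtoC s * t) = qpow (r * s) t.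
Proof. unfold qpow. f_equal. rewrite !RtoC_mult. ring. Qed.

Lemma qpow_natC n t : qpow (INR n) t = E (natC n * (2 * (RtoC PI * Ci * t))).
Proof. rewrite qpow_cexp. f_equal. unfold natC. rewrite RtoC_mult. ring. Qed.

Lemma scaled_u_equation s e p1 p2 : s * s = 2 ->
  p1 * p1 * (p1 * p1) * (1 + 4 * e ^ 8 * (p2 * p2) * (p2 * p2)) = p2 * p2 ->
  (s * e * p1) ^ 4 * ((s * e ^ 2 * p2) ^ 4 + 1) = 2 * (s * e ^ 2 * p2) ^ 2.
Proof.
  intros Hs K.
  transitivity ((s * s) * (s * s) * e ^ 4 * (p1 * p1 * (p1 * p1))
                * ((s * s) * (s * s) * e ^ 8 * (p2 * p2) * (p2 * p2) + 1)); [ring|].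
  rewrite Hs.
  transitivity (4 * e ^ 4 * (p1 * p1 * (p1 * p1) * (1 + 4 * e ^ 8 * (p2 * p2) * (p2 * p2))));
    [ring|].
  rewrite K.
  transitivity (2 * ((s * s) * e ^ 4 * (p2 * p2))); [rewrite Hs; ring | ring].
Qed.

Close Scope C_scope.

Theorem proposition1 (tau : C) (Htau : 0 < Im tau) :
  (exists Pu1 Pu2 : C,
     prod_conv (u_factor tau) Pu1 /\
     prod_conv (u_factor (Cmult (RtoC 2) tau)) Pu2 /\
     let x := Cmult (Cmult (RtoC (sqrt 2)) (qpow (1/8) tau)) Pu1 in
     let y := Cmult (Cmult (RtoC (sqrt 2)) (qpow (1/8) (Cmult (RtoC 2) tau))) Pu2 in
     Cmult (Cpow x 4) (Cplus (Cpow y 4) (RtoC 1)) = Cmult (RtoC 2) (Cpow y 2))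
  /\
  (exists Pv1 Pv2 : C,
     prod_conv (v_factor tau) Pv1 /\
     prod_conv (v_factor (Cmult (RtoC 2) tau)) Pv2 /\
     let x := Cmult (qpow (1/2) tau) Pv1 in
     let y := Cmult (qpow (1/2) (Cmult (RtoC 2) tau)) Pv2 in
     Cplus (Cplus (Cmult (Cpow x 2) y) (Cpow x 2)) (Cpow y 2) = y).
Proof.
  pose proof (Re_pi_i_neg tau Htau) as HU. set (U := (RtoC PI * Ci * tau)%C) in *.
  assert (HU2 : (RtoC PI * Ci * (RtoC 2 * tau) = 2 * U)%C) by (unfold U; ring).
  assert (Hhalf : forall k, qpow (1 / 2) (RtoC k * tau) = E (RtoC k * U)).
  { intros k. rewrite qpow_scal, qpow_cexp. replace (2 * (1 / 2 * k))%R with k by field.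
    reflexivity. }
  split.
  - exists (u_prod (2 * U)), (u_prod (2 * (2 * U))). split; [|split].
    + apply u_prod_conv; [Re_lt0 | intros n; apply qpow_natC].
    + apply u_prod_conv; [Re_lt0 | intros n; rewrite qpow_natC, HU2; reflexivity].
    + pose proof (u_prod_modular_equation U HU) as K. cbv zeta in K |- *.
      rewrite qpow_scal. replace (1 / 8 * 2)%R with (INR 2 * (1 / 8))%R by (simpl; field).
      rewrite <- qpow_pow.
      apply scaled_u_equation.
      * rewrite <- RtoC_mult, sqrt_sqrt by lra. reflexivity.
      * rewrite qpow_pow, qpow_cexp. fold U.
        replace (2 * (INR 8 * (1 / 8)))%R with 2%R by (simpl; field).
        replace (2 * (2 * U))%C with (4 * U)%C by ring. exact K.
  - exists (v_prod U), (v_prod (2 * U)). split; [|split].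
    + apply v_prod_conv; [auto | intros n; apply qpow_natC].
    + apply v_prod_conv; [Re_lt0 | intros n; rewrite qpow_natC, HU2; reflexivity].
    + pose proof (v_prod_modular_equation U HU) as K. cbv zeta in K |- *.
      rewrite Hhalf, <- (Cmult_1_l tau), Hhalf, Cmult_1_l. simpl. rewrite <- K at 4. ring.
Qed.
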